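(* Let $K$ be a convex domain, with supplementary angle function $\Omega$ on $\partial K$ and $\Omega_K=\max_{\partial K}\Omega$. Then: (i) if $\Omega_K<\pi/2$, then $h_K>0$; (ii) if $\Omega(\zeta)>\pi/2$ for some $\zeta\in\partial K$, then $h_K=0$; (iii) if $\Omega_K=\pi/2$ and every boundary point $\zeta$ with $\Omega(\zeta)=\pi/2$ is a vertex at which two straight line segments of $\partial K$ meet (i.e. in some neighborhood of $\zeta$ the boundary arc preceding $\zeta$ and the boundary arc following $\zeta$ are both straight line segments, necessarily orthogonal), then $h_K>0$; (iv) if $\Omega_K=\pi/2$ and there is a point $\zeta\in\partial K$ with $\Omega(\zeta)=\pi/2$ such that in every neighborhood of $\zeta$ the boundary arc preceding $\zeta$ or the boundary arc following $\zeta$ fails to be a straight line segment, then $h_K=0$.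
   Context: A convex domain is a compact convex subset $K\subset\mathbb{C}$ with nonempty interior. A unit vector $\nu$ is an outer normal to $K$ at $\zeta\in\partial K$ if $\mathrm{Re}((z-\zeta)\overline{\nu})\le 0$ for all $z\in K$. The set of arguments of outer normals at $\zeta$ is a closed arc of the circle; the supplementary angle $\Omega(\zeta)\in[0,\pi)$ is the length of this arc (equivalently, the jump $\alpha_+-\alpha_-$ of the tangent direction at $\zeta$, i.e. $\pi$ minus the interior angle of $K$ at $\zeta$), and $\Omega_K:=\max_{\zeta\in\partial K}\Omega(\zeta)$. For an outer unit normal $\nu$ at $\zeta$, $(\zeta+\nu\mathbb{R})\cap K=[\zeta,\zeta-h\nu]$ with $h\ge0$; the local depth $h_K(\zeta)$ is the maximum of such $h$ over all outer unit normals at $\zeta$, and the depth is $h_K:=\inf_{\zeta\in\partial K}h_K(\zeta)$. *)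

(* the plane C is modelled as R*R (Euclidean plane). *)
From Stdlib Require Import Reals Lra Classical ClassicalEpsilon.
Open Scope R_scope.

Definition pt := (R * R)%type.
Definition padd (p q : pt) : pt := (fst p + fst q, snd p + snd q).
Definition psub (p q : pt) : pt := (fst p - fst q, snd p - snd q).
Definition pscale (t : R) (p : pt) : pt := (t * fst p, t * snd p).
(* Re (z * conj w) = Euclidean inner product *)
Definition dot (p q : pt) : R := fst p * fst q + snd p * snd q.
Definition pnorm (p : pt) : R := sqrt (dot p p).
Definition dist (p q : pt) : R := pnorm (psub p q).

(* The least upper bound of E if it exists, 0 otherwise. *)
Definition sup_of (E : R -> Prop) : R :=
  match excluded_middle_informative (exists l, is_lub E l) with
  | left H => proj1_sig (constructive_indefinite_description _ H)
  | right _ => 0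
  end.
Definition inf_of (E : R -> Prop) : R := - sup_of (fun x => E (- x)).

Definition interior (K : pt -> Prop) (p : pt) : Prop :=
  exists r, 0 < r /\ forall q, dist q p < r -> K q.
Definition closed_set (K : pt -> Prop) : Prop :=
  forall p, ~ K p -> exists r, 0 < r /\ forall q, dist q p < r -> ~ K q.
Definition bounded_set (K : pt -> Prop) : Prop :=
  exists M, forall p, K p -> pnorm p <= M.
Definition convex_set (K : pt -> Prop) : Prop :=
  forall p q t, K p -> K q -> 0 <= t <= 1 ->
    K (padd (pscale (1 - t) p) (pscale t q)).

Definition convex_domain (K : pt -> Prop) : Prop :=
  closed_set K /\ bounded_set K /\ convex_set K /\ exists p, interior K p.

Definition boundary (K : pt -> Prop) (z : pt) : Prop := K z /\ ~ interior K z.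

Definition outer_normal (K : pt -> Prop) (zeta nu : pt) : Prop :=
  pnorm nu = 1 /\ forall z, K z -> dot (psub z zeta) nu <= 0.

(* Omega(zeta): length of the closed arc of arguments of outer normals,
   i.e. the supremum of lengths t2 - t1 of intervals [t1,t2] of arguments
   all of which are arguments of outer normals. *)
Definition Omega (K : pt -> Prop) (zeta : pt) : R :=
  sup_of (fun l => exists t1 t2, t1 <= t2 /\ l = t2 - t1 /\
            forall t, t1 <= t <= t2 -> outer_normal K zeta (cos t, sin t)).

Definition Omega_K (K : pt -> Prop) : R :=
  sup_of (fun w => exists zeta, boundary K zeta /\ w = Omega K zeta).

Definition normal_chord (K : pt -> Prop) (zeta : pt) (h : R) : Prop :=
  exists nu, outer_normal K zeta nu /\ 0 <= h /\
    forall t, K (padd zeta (pscale t nu)) <-> (- h <= t <= 0).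

Definition local_depth (K : pt -> Prop) (zeta : pt) : R :=
  sup_of (normal_chord K zeta).

Definition depth (K : pt -> Prop) : R :=
  inf_of (fun h => exists zeta, boundary K zeta /\ h = local_depth K zeta).

Definition two_segment_vertex (K : pt -> Prop) (zeta : pt) : Prop :=
  exists r u v, 0 < r /\ pnorm u = 1 /\ pnorm v = 1 /\
    forall p, dist p zeta < r ->
      (boundary K p <->
        exists s, 0 <= s /\ (p = padd zeta (pscale s u) \/ p = padd zeta (pscale s v))).

(** If [depth K] is not positive, there are boundary points [p] with arbitrarily short normal
    chords.  A point at small distance beyond the far end of such a chord lies outside [K]; its
    nearest point in [K] is close to [p] and carries a normal making an angle of at least [PI/2]
    with the normal at [p].  In the limit, some boundary point [z] carries two such normals, so
    [Omega z >= PI/2]; this gives (i).  For (iii), [z] is a vertex where two segments meet at an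
    angle of at least [PI/2] (otherwise their normals would be more than [PI/2] apart), and the
    normal chords at points of the segments near [z] run inside the triangle they span, so they
    are uniformly long, contradicting their shortness near [z].

    Conversely, if [Omega zeta > PI/2] then [K] lies in a wedge of opening less than [PI/2] at
    [zeta], and the first point of [K] on a line at distance [s] from [zeta] crossing the wedge has
    normal chords of length [O(s)]: this is (ii).  If [Omega zeta = PI/2], [K] lies in the quadrant
    cut out by two orthogonal normals.  When [zeta] is not a two-segment vertex, one leg of the
    quadrant leaves [K] at once, so near it [K] is a thin cusp along the other leg, and the
    boundary points close to [zeta] have arbitrarily short normal chords: this is (iv). *)

From Pilot Require Import Defs.
From Stdlib Require Import Reals Lra Lia Psatz Classical ClassicalEpsilon.
(* [Reals] shadows [Defs.dist]. *)
Import Defs.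
Open Scope R_scope.

Ltac pt_ring := unfold dot, psub, padd, pscale; cbn [fst snd]; ring.
Ltac pt_field := unfold dot, psub, padd, pscale; cbn [fst snd]; field.

(** * Real numbers, plane vectors, suprema and sequences *)

Lemma Rdiv_nonneg a b : 0 <= a -> 0 < b -> 0 <= a / b.
Proof. intros Ha Hb. apply Rmult_le_pos; [auto | apply Rlt_le, Rinv_0_lt_compat; auto]. Qed.

Lemma Rdiv_le1 a b : 0 <= a <= b -> 0 < b -> 0 <= a / b <= 1.
Proof.
  intros Ha Hb. split; [apply Rdiv_nonneg; lra|].
  apply (Rmult_le_reg_r b); auto. unfold Rdiv. rewrite Rmult_assoc, Rinv_l; lra.
Qed.

Lemma pos_below a b : 0 < a -> 0 < b -> exists s, 0 < s /\ s <= a /\ s <= b.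
Proof. intros Ha Hb. exists (Rmin a b). split; [apply Rmin_pos; auto | split; [apply Rmin_l | apply Rmin_r]]. Qed.

Lemma small_scale D eps : 0 <= D -> 0 < eps -> exists tau, 0 < tau <= 1 /\ tau * tau * D <= eps * eps.
Proof.
  intros HD He. set (tau := Rmin 1 (eps / (D + 1))).
  assert (Htau : 0 < tau <= 1) by (split; [apply Rmin_pos; [|apply Rdiv_lt_0_compat]; lra | apply Rmin_l]).
  assert (Htau2 : tau * (D + 1) <= eps).
  { apply Rle_trans with (eps / (D + 1) * (D + 1)); [|right; field; lra].
    apply Rmult_le_compat_r; [lra | apply Rmin_r]. }
  exists tau. split; auto.
  assert (tau * tau * D <= (tau * (D + 1)) * (tau * (D + 1))) by nra.
  assert ((tau * (D + 1)) * (tau * (D + 1)) <= eps * eps) by (apply Rmult_le_compat; nra).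
  lra.
Qed.

Lemma Rabs_le_inv a b : Rabs a <= b -> - b <= a <= b.
Proof. intros H. pose proof (Rle_abs a). pose proof (Rle_abs (- a)). rewrite Rabs_Ropp in *. lra. Qed.

Lemma sq_lt_between a r : 0 < r -> a * a < r * r -> - r < a < r.
Proof. intros Hr H. split; nra. Qed.

Lemma acos_ge_PI2 c : -1 <= c <= 0 -> PI / 2 <= acos c.
Proof.
  intros Hc. destruct (acos_bound c) as [A1 A2]. apply Rnot_lt_le; intro Hlt.
  destruct (Req_dec c 0) as [->|Hne]; [rewrite acos_0 in Hlt; lra|].
  assert (0 < cos (acos c)) by (apply cos_gt_0; lra).
  rewrite cos_acos in H by lra. lra.
Qed.

Lemma acos_gt_PI2 c : -1 <= c < 0 -> PI / 2 < acos c.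
Proof.
  intros Hc. destruct (acos_ge_PI2 c ltac:(lra)) as [H|H]; auto.
  pose proof (cos_acos c ltac:(lra)) as H0. rewrite <- H, cos_PI2 in H0. lra.
Qed.

Lemma pt_ext (p q : pt) : fst p = fst q -> snd p = snd q -> p = q.
Proof. destruct p, q; cbn; intros -> ->; reflexivity. Qed.

Lemma dot_comm u v : dot u v = dot v u.
Proof. unfold dot; ring. Qed.

Lemma dot_self_nonneg p : 0 <= dot p p.
Proof. unfold dot; nra. Qed.

Lemma pnorm_eq1 nu : pnorm nu = 1 <-> dot nu nu = 1.
Proof.
  unfold pnorm. split; intro H.
  - rewrite <- (sqrt_sqrt _ (dot_self_nonneg nu)), H; ring.
  - rewrite H; apply sqrt_1.
Qed.

Lemma dist_lt_of_sq p q r : 0 < r -> dot (psub p q) (psub p q) < r * r -> dist p q < r.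
Proof.
  intros Hr H. unfold dist, pnorm. rewrite <- (sqrt_Rsqr r) by lra.
  apply sqrt_lt_1_alt. pose proof (dot_self_nonneg (psub p q)). unfold Rsqr; lra.
Qed.

Lemma sq_lt_of_dist_lt p q r : dist p q < r -> dot (psub p q) (psub p q) < r * r.
Proof.
  unfold dist, pnorm. intros H. pose proof (dot_self_nonneg (psub p q)) as H0.
  pose proof (sqrt_pos (dot (psub p q) (psub p q))).
  rewrite <- (sqrt_sqrt _ H0). nra.
Qed.

Lemma dot_unit_bound u v : dot u u = 1 -> dot v v = 1 -> -1 <= dot u v <= 1.
Proof.
  unfold dot; intros Hu Hv.
  pose proof (Rle_0_sqr (fst u - fst v)). pose proof (Rle_0_sqr (snd u - snd v)).
  pose proof (Rle_0_sqr (fst u + fst v)). pose proof (Rle_0_sqr (snd u + snd v)).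
  unfold Rsqr in *. split; nra.
Qed.

Lemma dot_unit_eq_m1 u v : dot u u = 1 -> dot v v = 1 -> dot u v = -1 -> v = pscale (-1) u.
Proof.
  unfold dot; intros Hu Hv Huv.
  assert (Hz : Rsqr (fst u + fst v) + Rsqr (snd u + snd v) = 0) by (unfold Rsqr; nra).
  apply Rplus_sqr_eq_0 in Hz as [E1 E2]. apply pt_ext; cbn; lra.
Qed.

Lemma dot_unit_angles t1 t2 : dot (cos t1, sin t1) (cos t2, sin t2) = cos (t2 - t1).
Proof. unfold dot; cbn. rewrite cos_minus; ring. Qed.

Lemma dot_unit_angle t : dot (cos t, sin t) (cos t, sin t) = 1.
Proof. rewrite dot_unit_angles, Rminus_diag; apply cos_0. Qed.

Lemma unit_angle nu : dot nu nu = 1 -> exists t, nu = (cos t, sin t).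
Proof.
  unfold dot. intros H.
  assert (Hb : -1 <= fst nu <= 1) by (split; nra).
  destruct (Rle_dec 0 (snd nu)) as [Hs|Hs].
  - exists (acos (fst nu)). apply pt_ext; cbn.
    + rewrite cos_acos; auto.
    + rewrite sin_acos; auto. replace (1 - (fst nu)²) with (Rsqr (snd nu)) by (unfold Rsqr; nra).
      rewrite sqrt_Rsqr; auto.
  - exists (- acos (fst nu)). apply pt_ext; cbn.
    + rewrite cos_neg, cos_acos; auto.
    + rewrite sin_neg, sin_acos; auto. replace (1 - (fst nu)²) with (Rsqr (- snd nu)) by (unfold Rsqr; nra).
      rewrite sqrt_Rsqr; lra.
Qed.

(* The coefficients solve the Gram system [al + g be = w.u], [g al + be = w.v]. *)
Lemma unit_basis_decomp u v w : dot u u = 1 -> dot v v = 1 -> dot u v * dot u v < 1 ->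
  let g := dot u v in
  w = padd (pscale ((dot w u - g * dot w v) / (1 - g * g)) u)
           (pscale ((dot w v - g * dot w u) / (1 - g * g)) v).
Proof.
  intros Hu Hv Hg g.
  set (al := (dot w u - g * dot w v) / (1 - g * g)).
  set (be := (dot w v - g * dot w u) / (1 - g * g)).
  set (x1 := fst w - (al * fst u + be * fst v)). set (x2 := snd w - (al * snd u + be * snd v)).
  assert (Hd : 0 < 1 - g * g) by (unfold g; lra).
  assert (E1 : x1 * fst u + x2 * snd u = 0).
  { transitivity (dot w u - al * dot u u - be * dot u v); [unfold x1, x2, dot; ring|].
    rewrite Hu. fold g. unfold al, be. field. lra. }
  assert (E2 : x1 * fst v + x2 * snd v = 0).
  { transitivity (dot w v - al * dot u v - be * dot v v); [unfold x1, x2, dot; ring|].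
    rewrite Hv. fold g. unfold al, be. field. lra. }
  set (det := fst u * snd v - snd u * fst v).
  assert (Hdet : det <> 0).
  { intro H0. assert (det * det = 1 - g * g).
    { transitivity (dot u u * dot v v - g * g); [unfold det, g, dot; ring|]. rewrite Hu, Hv; ring. }
    nra. }
  assert (X1 : x1 * det = 0).
  { transitivity ((x1 * fst u + x2 * snd u) * snd v - (x1 * fst v + x2 * snd v) * snd u);
      [unfold det; ring|]. rewrite E1, E2; ring. }
  assert (X2 : x2 * det = 0).
  { transitivity ((x1 * fst v + x2 * snd v) * fst u - (x1 * fst u + x2 * snd u) * fst v);
      [unfold det; ring|]. rewrite E1, E2; ring. }
  apply Rmult_integral in X1 as [X1|X1]; [|contradiction].
  apply Rmult_integral in X2 as [X2|X2]; [|contradiction].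
  apply pt_ext; cbn; unfold x1, x2 in *; lra.
Qed.

Definition orthonormal (e n : pt) : Prop := dot e e = 1 /\ dot n n = 1 /\ dot e n = 0.

Lemma orthonormal_sym e n : orthonormal e n -> orthonormal n e.
Proof. intros (He & Hn & Hen). repeat split; auto. rewrite dot_comm; auto. Qed.

Lemma orthonormal_decomp e n u : orthonormal e n ->
  u = padd (pscale (dot u e) e) (pscale (dot u n) n).
Proof.
  intros (He & Hn & Hen).
  assert (Hg : dot e n * dot e n < 1) by (rewrite Hen; lra).
  pose proof (unit_basis_decomp e n u He Hn Hg) as D. cbv zeta in D. rewrite Hen in D.
  rewrite D at 1. f_equal; f_equal; field.
Qed.

Lemma orthonormal_dot e n u v : orthonormal e n ->
  dot u v = dot u e * dot v e + dot u n * dot v n.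
Proof.
  intros H. pose proof H as (He & Hn & Hen).
  rewrite (orthonormal_decomp e n u H) at 1. rewrite (orthonormal_decomp e n v H) at 1.
  set (a := dot u e). set (b := dot u n). set (c := dot v e). set (d := dot v n).
  transitivity (a * c * dot e e + (a * d + b * c) * dot e n + b * d * dot n n); [pt_ring|].
  rewrite He, Hn, Hen; ring.
Qed.

Lemma orthonormal_completion n v : dot n n = 1 -> exists e, orthonormal e n /\ dot v e <= 0.
Proof.
  intros Hn.
  assert (Ortho : forall sg, sg * sg = 1 -> orthonormal (sg * snd n, - sg * fst n) n).
  { intros sg Hsg. unfold orthonormal, dot in *; cbn. split; [|split; [exact Hn|ring]].
    transitivity (sg * sg * (fst n * fst n + snd n * snd n)); [ring|]. rewrite Hsg, Hn; ring. }
  destruct (Rle_dec (dot v (snd n, - fst n)) 0) as [H|H].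
  - exists (1 * snd n, - 1 * fst n). split; [apply Ortho; ring|]. unfold dot in *; cbn in *; lra.
  - exists (-1 * snd n, - -1 * fst n). split; [apply Ortho; ring|]. unfold dot in *; cbn in *; lra.
Qed.

(* In the plane a unit vector has only two unit normals, [x] and [-x]. *)
Lemma unit_normals_collinear u x y : dot u u = 1 -> dot x x = 1 -> dot y y = 1 ->
  dot u x = 0 -> dot u y = 0 -> dot x y * dot x y = 1.
Proof.
  intros Hu Hx Hy Hux Huy.
  assert (F : orthonormal u x) by (repeat split; auto).
  rewrite <- Hy, (orthonormal_dot u x y y F), (dot_comm x y), (dot_comm y u), Huy. ring.
Qed.

Lemma sq_dist_ray z s w : dot (psub (padd z (pscale s w)) z) (psub (padd z (pscale s w)) z) = s * s * dot w w.
Proof. pt_ring. Qed.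

Lemma dot_psub_ray p t v z w : dot (psub (padd p (pscale t v)) z) w = dot (psub p z) w + t * dot v w.
Proof. pt_ring. Qed.

Lemma sq_dist_pos p q : p <> q -> 0 < dot (psub p q) (psub p q).
Proof.
  intros Hpq. unfold dot, psub; cbn.
  pose proof (Rle_0_sqr (fst p - fst q)). pose proof (Rle_0_sqr (snd p - snd q)). unfold Rsqr in *.
  destruct (Req_dec (fst p) (fst q)); [destruct (Req_dec (snd p) (snd q))|].
  - exfalso. apply Hpq, pt_ext; auto.
  - assert (0 < (snd p - snd q) * (snd p - snd q)) by (apply Rsqr_pos_lt; lra). lra.
  - assert (0 < (fst p - fst q) * (fst p - fst q)) by (apply Rsqr_pos_lt; lra). lra.
Qed.

Lemma dot_sq_le_unit d nu : dot nu nu = 1 -> dot d nu * dot d nu <= dot d d.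
Proof.
  intros Hn. assert (E : dot d d * dot nu nu - dot d nu * dot d nu =
    Rsqr (fst d * snd nu - snd d * fst nu)) by (unfold dot, Rsqr; ring).
  rewrite Hn in E. pose proof (Rle_0_sqr (fst d * snd nu - snd d * fst nu)). lra.
Qed.

Lemma dot_convex_comb_le A B lam : 0 <= lam <= 1 ->
  dot (padd (pscale (1 - lam) A) (pscale lam B)) (padd (pscale (1 - lam) A) (pscale lam B)) <=
  (1 - lam) * dot A A + lam * dot B B.
Proof.
  intros Hl. pose proof (dot_self_nonneg (psub A B)).
  assert (0 <= lam * (1 - lam)) by nra.
  assert ((1 - lam) * dot A A + lam * dot B B -
     dot (padd (pscale (1 - lam) A) (pscale lam B)) (padd (pscale (1 - lam) A) (pscale lam B)) =
     lam * (1 - lam) * dot (psub A B) (psub A B)) by pt_ring.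
  nra.
Qed.

(* The two unit normals [nu] of [u] and [mu] of [v], each pointing away from the other leg,
   make the angle [PI - angle (u, v)]. *)
Lemma leg_normals_dot u v nu mu : dot u u = 1 -> dot v v = 1 -> dot nu nu = 1 -> dot mu mu = 1 ->
  dot nu u = 0 -> dot mu v = 0 -> dot nu v < 0 -> dot mu u < 0 -> dot nu mu = - dot u v.
Proof.
  intros Hu Hv Hnu Hmu Hnuu Hmuv Hnuv Hmuu.
  assert (F : orthonormal u nu) by (split; [auto | split; [auto | rewrite dot_comm; auto]]).
  set (g := dot u v). set (a := dot mu u). set (b := dot mu nu). set (c := dot v nu).
  assert (E1 : a * g + b * c = 0)
    by (unfold a, b, c, g; rewrite <- Hmuv, (orthonormal_dot u nu mu v F), (dot_comm v u); ring).
  assert (E2 : a * a + b * b = 1) by (unfold a, b; rewrite <- Hmu, (orthonormal_dot u nu mu mu F); ring).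
  assert (E3 : g * g + c * c = 1)
    by (unfold g, c; rewrite <- Hv, (orthonormal_dot u nu v v F), (dot_comm v u); ring).
  assert (Ha : a < 0) by auto. assert (Hc : c < 0) by (unfold c; rewrite dot_comm; auto).
  assert (F1 : a * a * (g * g) = b * b * (c * c)) by (replace (a * a * (g * g)) with ((a * g) * (a * g)) by ring;
    replace (a * g) with (- (b * c)) by lra; ring).
  assert (Eac : a = c).
  { assert ((a - c) * (a + c) = 0) by nra. apply Rmult_integral in H as [H|H]; lra. }
  assert (Hz : a * (g + b) = 0) by (rewrite <- Eac in E1; rewrite <- E1; ring).
  apply Rmult_integral in Hz as [Hz|Hz]; [lra|]. rewrite dot_comm. fold b. lra.
Qed.

Lemma is_lub_unique E a b : is_lub E a -> is_lub E b -> a = b.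
Proof. intros [Ha1 Ha2] [Hb1 Hb2]. apply Rle_antisym; auto. Qed.

Lemma is_lub_of_bounded E M x : (forall y, E y -> y <= M) -> E x -> exists l, is_lub E l.
Proof.
  intros HM Hx. destruct (completeness E) as [l Hl]; [exists M; intros y Hy; auto | exists x; auto |].
  exists l; auto.
Qed.

Lemma is_lub_approx E l e : is_lub E l -> 0 < e -> exists x, E x /\ l - e < x.
Proof.
  intros [_ H2] He. apply NNPP; intro Hn.
  assert (l <= l - e) by (apply H2; intros y Hy; apply Rnot_lt_le; intro; apply Hn; eauto).
  lra.
Qed.

Lemma sup_of_is_lub E : (exists l, is_lub E l) -> is_lub E (sup_of E).
Proof.
  intros H. unfold sup_of. destruct excluded_middle_informative as [H'|H']; [|contradiction].
  destruct constructive_indefinite_description; auto.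
Qed.

Lemma sup_of_no_lub E : ~ (exists l, is_lub E l) -> sup_of E = 0.
Proof.
  intros H. unfold sup_of. destruct excluded_middle_informative; [contradiction|auto].
Qed.

Lemma sup_of_ub E M x : (forall y, E y -> y <= M) -> E x -> x <= sup_of E.
Proof.
  intros HM Hx. apply (sup_of_is_lub E (is_lub_of_bounded E M x HM Hx)); auto.
Qed.

Lemma sup_of_le E b : 0 <= b -> (forall y, E y -> y <= b) -> sup_of E <= b.
Proof.
  intros Hb H. destruct (classic (exists l, is_lub E l)) as [Hl|Hl].
  - apply (sup_of_is_lub E Hl). intros y Hy; auto.
  - rewrite sup_of_no_lub; auto.
Qed.

Lemma sup_of_nonneg E : (forall y, E y -> 0 <= y) -> 0 <= sup_of E.
Proof.
  intros H. destruct (classic (exists l, is_lub E l)) as [Hl|Hl].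
  - pose proof (sup_of_is_lub E Hl) as Hs. destruct (is_lub_approx E _ 1 Hs) as (x & Ex & _); [lra|].
    pose proof (H x Ex). destruct Hs as [Hs _]. specialize (Hs x Ex). lra.
  - rewrite sup_of_no_lub; auto; lra.
Qed.

Lemma sup_of_gt E x : 0 <= x -> x < sup_of E -> exists y, E y /\ x < y.
Proof.
  intros Hx H. destruct (classic (exists l, is_lub E l)) as [Hl|Hl].
  - destruct (is_lub_approx E _ (sup_of E - x) (sup_of_is_lub E Hl)) as (y & Ey & Hy); [lra|].
    exists y; split; auto; lra.
  - rewrite sup_of_no_lub in H; auto. lra.
Qed.

Definition inv_succ (n : nat) : R := / INR (S n).

Lemma inv_succ_pos n : 0 < inv_succ n.
Proof. apply Rinv_0_lt_compat, lt_0_INR; lia. Qed.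

Lemma inv_succ_antimono n m : (n <= m)%nat -> inv_succ m <= inv_succ n.
Proof. intros H. apply Rinv_le_contravar; [apply lt_0_INR; lia | apply le_INR; lia]. Qed.

Lemma inv_succ_le1 n : inv_succ n <= 1.
Proof. pose proof (inv_succ_antimono 0 n ltac:(lia)). unfold inv_succ in *; cbn in *. lra. Qed.

Lemma inv_succ_eventually_lt e : 0 < e -> exists N, forall n, (n >= N)%nat -> inv_succ n < e.
Proof.
  intros He. destruct (archimed_cor1 e He) as [N [HN HN0]]. exists N. intros n Hn.
  apply Rle_lt_trans with (/ INR N); auto.
  apply Rinv_le_contravar; [apply lt_0_INR; lia | apply le_INR; lia].
Qed.

Definition strict_incr (phi : nat -> nat) : Prop := forall n, (phi n < phi (S n))%nat.

Lemma strict_incr_lt phi : strict_incr phi -> forall n m, (n < m)%nat -> (phi n < phi m)%nat.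
Proof. intros H n m Hnm; induction Hnm; [apply H|]. specialize (H m); lia. Qed.

Lemma strict_incr_ge phi : strict_incr phi -> forall n, (n <= phi n)%nat.
Proof. intros H n; induction n; [lia|]. specialize (H n); lia. Qed.

Lemma strict_incr_comp phi psi : strict_incr phi -> strict_incr psi -> strict_incr (fun n => phi (psi n)).
Proof. intros H1 H2 n. apply strict_incr_lt; auto. Qed.

Lemma inv_succ_subseq phi n : strict_incr phi -> inv_succ (phi n) <= inv_succ n.
Proof. intros H. apply inv_succ_antimono, strict_incr_ge; auto. Qed.

Lemma Un_cv_subseq (u : nat -> R) l phi : Un_cv u l -> strict_incr phi -> Un_cv (fun n => u (phi n)) l.
Proof.
  intros H Hp e He. destruct (H e He) as [N HN]. exists N. intros n Hn.
  apply HN. pose proof (strict_incr_ge phi Hp n). lia.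
Qed.

Definition subseq_of (f : nat -> nat -> nat) : nat -> nat :=
  fix g n := match n with 0 => f 0%nat 0%nat | S m => f (S (g m)) (S m) end.

Lemma bounded_seq_cv_subseq (u : nat -> R) M : (forall n, Rabs (u n) <= M) ->
  exists phi, strict_incr phi /\ exists l, Un_cv (fun n => u (phi n)) l.
Proof.
  intros HM.
  destruct (Bolzano_Weierstrass u (fun c => -M <= c <= M) (compact_P3 (-M) M)) as [l Hl].
  { intros n. specialize (HM n). apply Rabs_le_inv in HM. lra. }
  assert (Hs : forall N k, exists p, (N <= p)%nat /\ Rabs (u p - l) < inv_succ k).
  { intros N k. destruct (Hl (disc l (mkposreal _ (inv_succ_pos k))) N) as [p [Hp1 Hp2]].
    - exists (mkposreal _ (inv_succ_pos k)). intros y Hy; auto.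
    - exists p; split; auto. }
  set (F := fun N k => proj1_sig (constructive_indefinite_description _ (Hs N k))).
  assert (HF : forall N k, (N <= F N k)%nat /\ Rabs (u (F N k) - l) < inv_succ k)
    by (intros N k; unfold F; destruct constructive_indefinite_description; auto).
  exists (subseq_of F). split.
  - intro n. cbn. destruct (HF (S (subseq_of F n)) (S n)); lia.
  - exists l. intros e He. destruct (inv_succ_eventually_lt e He) as [N HN]. exists N. intros n Hn.
    unfold Rdist. specialize (HN n Hn). destruct n; cbn.
    + destruct (HF 0%nat 0%nat) as [_ H]. lra.
    + destruct (HF (S (subseq_of F n)) (S n)) as [_ H]. lra.
Qed.

Definition cv_pt (p : nat -> pt) (l : pt) : Prop :=
  Un_cv (fun n => fst (p n)) (fst l) /\ Un_cv (fun n => snd (p n)) (snd l).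

Lemma cv_pt_subseq p l phi : cv_pt p l -> strict_incr phi -> cv_pt (fun n => p (phi n)) l.
Proof. intros [H1 H2] Hp. split; apply (Un_cv_subseq (fun n => _ (p n))); auto. Qed.

Lemma bounded_pt_seq_cv_subseq (p : nat -> pt) M :
  (forall n, Rabs (fst (p n)) <= M /\ Rabs (snd (p n)) <= M) ->
  exists phi, strict_incr phi /\ exists l, cv_pt (fun n => p (phi n)) l.
Proof.
  intros HM.
  destruct (bounded_seq_cv_subseq (fun n => fst (p n)) M) as (phi1 & Hp1 & l1 & Hl1);
    [intros n; apply HM|].
  destruct (bounded_seq_cv_subseq (fun n => snd (p (phi1 n))) M) as (phi2 & Hp2 & l2 & Hl2);
    [intros n; apply HM|].
  exists (fun n => phi1 (phi2 n)). split; [apply strict_incr_comp; auto|].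
  exists (l1, l2). split; cbn; auto. apply (Un_cv_subseq (fun n => fst (p (phi1 n)))); auto.
Qed.

Lemma unit_coords_bound nu : dot nu nu = 1 -> Rabs (fst nu) <= 1 /\ Rabs (snd nu) <= 1.
Proof. unfold dot; intros H; split; apply Rabs_le; split; nra. Qed.

Lemma unit_seq_cv_subseq (nu : nat -> pt) : (forall n, dot (nu n) (nu n) = 1) ->
  exists phi, strict_incr phi /\ exists l, cv_pt (fun n => nu (phi n)) l.
Proof. intros H. apply (bounded_pt_seq_cv_subseq nu 1). intros n; apply unit_coords_bound; auto. Qed.

Lemma Un_cv_le_eventually (u : nat -> R) l b : Un_cv u l ->
  (exists N, forall n, (n >= N)%nat -> u n <= b) -> l <= b.
Proof.
  intros H [N HN]. apply Rnot_lt_le; intro Hl. destruct (H (l - b)) as [N' HN']; [lra|].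
  specialize (HN' (max N N') ltac:(lia)). specialize (HN (max N N') ltac:(lia)).
  unfold Rdist in HN'. apply Rabs_def2 in HN'. lra.
Qed.

Lemma Un_cv_le (u : nat -> R) l b : Un_cv u l -> (forall n, u n <= b) -> l <= b.
Proof. intros H Hb. apply (Un_cv_le_eventually u); auto. exists 0%nat; auto. Qed.

Lemma Un_cv_const_eq (u : nat -> R) l b : Un_cv u l -> (forall n, u n = b) -> l = b.
Proof.
  intros H Hb. apply Rle_antisym.
  - apply (Un_cv_le u); auto. intros n; rewrite Hb; lra.
  - enough (- l <= - b) by lra.
    apply (Un_cv_le (fun n => - u n)); [apply CV_opp; auto|]. intros n; rewrite Hb; lra.
Qed.

Lemma cv_pt_const (q : pt) : cv_pt (fun _ => q) q.
Proof. split; intros e He; exists 0%nat; intros; unfold Rdist; rewrite Rminus_diag, Rabs_R0; lra. Qed.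

Lemma cv_pt_psub a b la lb : cv_pt a la -> cv_pt b lb -> cv_pt (fun n => psub (a n) (b n)) (psub la lb).
Proof. intros [A1 A2] [B1 B2]. split; cbn; apply CV_minus; auto. Qed.

Lemma Un_cv_dot a b la lb : cv_pt a la -> cv_pt b lb -> Un_cv (fun n => dot (a n) (b n)) (dot la lb).
Proof. intros [A1 A2] [B1 B2]. unfold dot. apply CV_plus; apply CV_mult; auto. Qed.

Lemma cv_pt_eventually_near p l : cv_pt p l -> forall r, 0 < r ->
  exists N, forall n, (n >= N)%nat -> dot (psub (p n) l) (psub (p n) l) < r * r.
Proof.
  intros H r Hr.
  pose proof (cv_pt_psub _ _ _ _ H (cv_pt_const l)) as Hs.
  pose proof (Un_cv_dot _ _ _ _ Hs Hs) as Hd.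
  replace (dot (psub l l) (psub l l)) with 0 in Hd by pt_ring.
  destruct (Hd (r * r)) as [N HN]; [nra|]. exists N. intros n Hn.
  specialize (HN n Hn). unfold Rdist in HN. apply Rabs_def2 in HN. lra.
Qed.

Lemma Un_cv_close (u v : nat -> R) l c : Un_cv v l -> 0 <= c ->
  (forall n, Rabs (u n - v n) <= c * inv_succ n) -> Un_cv u l.
Proof.
  intros Hv Hc H e He. destruct (Hv (e / 2)) as [N1 HN1]; [lra|].
  destruct (inv_succ_eventually_lt (e / 2 / (c + 1))) as [N2 HN2]; [apply Rdiv_lt_0_compat; lra|].
  exists (max N1 N2). intros n Hn. specialize (HN1 n ltac:(lia)). specialize (HN2 n ltac:(lia)).
  specialize (H n). unfold Rdist in *. apply Rabs_le_inv in H. apply Rabs_def2 in HN1.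
  assert (c * inv_succ n <= e / 2).
  { pose proof (inv_succ_pos n).
    apply Rmult_lt_compat_l with (r := c + 1) in HN2; [|lra].
    replace ((c + 1) * (e / 2 / (c + 1))) with (e / 2) in HN2 by (field; lra). nra. }
  apply Rabs_def1; lra.
Qed.

Lemma cv_pt_close p q l c : cv_pt q l -> 0 <= c ->
  (forall n, Rabs (fst (p n) - fst (q n)) <= c * inv_succ n /\
             Rabs (snd (p n) - snd (q n)) <= c * inv_succ n) ->
  cv_pt p l.
Proof.
  intros [Q1 Q2] Hc H. split; [apply (Un_cv_close _ _ _ c Q1) | apply (Un_cv_close _ _ _ c Q2)];
    auto; intros n; apply H.
Qed.

Lemma coords_close_of_sq a b r : 0 <= r -> dot (psub a b) (psub a b) <= r * r ->
  Rabs (fst a - fst b) <= r /\ Rabs (snd a - snd b) <= r.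
Proof.
  unfold dot, psub; cbn. intros Hr H.
  pose proof (Rle_0_sqr (snd a - snd b)). pose proof (Rle_0_sqr (fst a - fst b)). unfold Rsqr in *.
  rewrite <- (Rabs_right r) by lra. split; apply Rsqr_le_abs_0; unfold Rsqr; lra.
Qed.

Lemma Un_cv_le_inv_succ (u : nat -> R) l b : Un_cv u l -> (forall n, u n <= b + inv_succ n) -> l <= b.
Proof.
  intros H Hb. apply Rnot_lt_le; intro Hl.
  destruct (inv_succ_eventually_lt ((l - b) / 2)) as [N HN]; [lra|].
  enough (l <= b + (l - b) / 2) by lra.
  apply (Un_cv_le_eventually u); auto. exists N. intros n Hn. specialize (HN n Hn). specialize (Hb n). lra.
Qed.

(** * Convex domains *)

Section ConvexDomain.
Variable K : pt -> Prop.
Hypothesis HK : convex_domain K.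

Lemma K_closed : closed_set K.
Proof. apply HK. Qed.

Lemma K_convex p q l w : K p -> K q -> 0 <= l <= 1 ->
  fst w = (1 - l) * fst p + l * fst q -> snd w = (1 - l) * snd p + l * snd q -> K w.
Proof.
  intros Hp Hq Hl H1 H2. destruct HK as (_ & _ & Hc & _).
  replace w with (padd (pscale (1 - l) p) (pscale l q)) by (apply pt_ext; cbn; lra).
  apply Hc; auto.
Qed.

Lemma K_segment p q l : K p -> K q -> 0 <= l <= 1 -> K (padd p (pscale l (psub q p))).
Proof. intros Hp Hq Hl. apply (K_convex p q l); auto; cbn; ring. Qed.

Lemma K_ray_shrink zeta w s1 s2 : K zeta -> 0 < s1 <= s2 -> K (padd zeta (pscale s2 w)) ->
  K (padd zeta (pscale s1 w)).
Proof.
  intros Kz Hs Kw. replace (padd zeta (pscale s1 w)) with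
    (padd zeta (pscale (s1 / s2) (psub (padd zeta (pscale s2 w)) zeta))).
  - apply K_segment; auto. apply Rdiv_le1; lra.
  - apply pt_ext; cbn; field; lra.
Qed.

Lemma K_bounded : exists M, 0 < M /\ forall p, K p -> Rabs (fst p) <= M /\ Rabs (snd p) <= M.
Proof.
  destruct HK as (_ & [M HM] & _ & _). exists (Rmax M 1).
  pose proof (Rmax_l M 1). pose proof (Rmax_r M 1). split; [lra|].
  intros p Hp. specialize (HM p Hp). unfold pnorm in HM.
  pose proof (sqrt_pos (dot p p)). pose proof (sqrt_sqrt _ (dot_self_nonneg p)).
  unfold dot in *. split; apply Rabs_le; split; nra.
Qed.

Lemma K_interior_ball : exists c rho, 0 < rho /\
  forall q, dot (psub q c) (psub q c) < rho * rho -> K q.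
Proof.
  destruct HK as (_ & _ & _ & [c [r [Hr H]]]). exists c, r. split; auto.
  intros q Hq. apply H, dist_lt_of_sq; auto.
Qed.

Lemma K_of_adherent p : (forall r, 0 < r -> exists q, K q /\ dot (psub q p) (psub q p) < r * r) -> K p.
Proof.
  intros H. apply NNPP; intro Hn. destruct (K_closed _ Hn) as (r & Hr & Hb).
  destruct (H r Hr) as (q & Kq & Hq). apply (Hb q); auto. apply dist_lt_of_sq; auto.
Qed.

Lemma K_seq_limit p l : (forall n, K (p n)) -> cv_pt p l -> K l.
Proof.
  intros Hp Hl. apply K_of_adherent. intros r Hr.
  destruct (cv_pt_eventually_near p l Hl r Hr) as [N HN]. exists (p N); split; auto.
Qed.

Lemma outer_normal_unit z nu : outer_normal K z nu -> dot nu nu = 1.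
Proof. intros [H _]. apply pnorm_eq1; auto. Qed.

Lemma outer_normal_ball_gap z nu c rho : outer_normal K z nu -> 0 < rho ->
  (forall q, dot (psub q c) (psub q c) < rho * rho -> K q) ->
  dot (psub c z) nu <= - (rho / 2).
Proof.
  intros Hnu Hr Hb. pose proof (outer_normal_unit _ _ Hnu) as Hn. destruct Hnu as [_ Hnz].
  set (q := padd c (pscale (rho / 2) nu)).
  assert (Kq : K q) by (apply Hb; unfold q; rewrite sq_dist_ray, Hn; nra).
  specialize (Hnz q Kq). unfold q in Hnz.
  replace (dot (psub (padd c (pscale (rho / 2) nu)) z) nu) with (dot (psub c z) nu + rho / 2 * dot nu nu)
    in Hnz by pt_ring. rewrite Hn in Hnz. lra.
Qed.

Lemma outer_normals_not_opposite z nu mu : outer_normal K z nu -> outer_normal K z mu ->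
  dot nu mu <> -1.
Proof.
  intros H1 H2 Hd. destruct K_interior_ball as (c & rho & Hr & Hb).
  pose proof (outer_normal_ball_gap _ _ _ _ H1 Hr Hb) as A1.
  pose proof (outer_normal_ball_gap _ _ _ _ H2 Hr Hb) as A2.
  rewrite (dot_unit_eq_m1 nu mu (outer_normal_unit _ _ H1) (outer_normal_unit _ _ H2) Hd) in A2.
  replace (dot (psub c z) (pscale (-1) nu)) with (- dot (psub c z) nu) in A2 by pt_ring. lra.
Qed.

Lemma outer_normal_not_interior z nu : outer_normal K z nu -> ~ interior K z.
Proof.
  intros Hnu [r [Hr Hb]]. pose proof (outer_normal_unit _ _ Hnu) as Hn.
  assert (Kq : K (padd z (pscale (r / 2) nu))) by (apply Hb, dist_lt_of_sq; [lra|]; rewrite sq_dist_ray, Hn; nra).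
  apply (proj2 Hnu) in Kq. replace (dot (psub (padd z (pscale (r / 2) nu)) z) nu) with (r / 2 * dot nu nu)
    in Kq by pt_ring. rewrite Hn in Kq. lra.
Qed.

Lemma outer_normal_limit z nu zs nus : (forall n, outer_normal K (z n) (nu n)) ->
  cv_pt z zs -> cv_pt nu nus -> outer_normal K zs nus.
Proof.
  intros H Hz Hn. split.
  - apply pnorm_eq1, (Un_cv_const_eq (fun n => dot (nu n) (nu n))); [apply Un_cv_dot; auto|].
    intros n. apply (outer_normal_unit (z n)); auto.
  - intros y Ky. apply (Un_cv_le (fun n => dot (psub y (z n)) (nu n))).
    + apply Un_cv_dot; auto. apply cv_pt_psub; auto. apply cv_pt_const.
    + intros n. apply (proj2 (H n)); auto.
Qed.

Lemma K_chord_le z nu h M : dot nu nu = 1 ->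
  (forall p, K p -> Rabs (fst p) <= M /\ Rabs (snd p) <= M) ->
  K z -> K (padd z (pscale (- h) nu)) -> 0 <= h -> h <= 3 * M.
Proof.
  intros Hn HM H1 H2 Hh. destruct (HM _ H1) as [A1 A2]. destruct (HM _ H2) as [B1 B2].
  apply Rabs_le_inv in A1, A2, B1, B2. unfold padd, pscale, dot in *; cbn in *. nra.
Qed.

Lemma local_depth_nonneg z : 0 <= local_depth K z.
Proof. apply sup_of_nonneg. intros y (nu & _ & Hy & _); auto. Qed.

Lemma normal_chord_le_local_depth z h : normal_chord K z h -> h <= local_depth K z.
Proof.
  intros Hh. destruct K_bounded as (M & HM0 & HM). apply (sup_of_ub _ (3 * M)); auto.
  intros y (nu & Hnu & Hy & Hc).
  assert (Kz : K (padd z (pscale 0 nu))) by (apply Hc; lra).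
  replace (padd z (pscale 0 nu)) with z in Kz by (apply pt_ext; cbn; ring).
  apply (K_chord_le z nu y M); auto; [apply (outer_normal_unit z); auto | apply Hc; lra].
Qed.

Lemma local_depth_le z e : 0 <= e ->
  (forall nu h, outer_normal K z nu -> 0 <= h -> K (padd z (pscale (- h) nu)) -> h <= e) ->
  local_depth K z <= e.
Proof.
  intros He H. apply sup_of_le; auto.
  intros y (nu & Hn & Hy & Hc). apply (H nu); auto. apply Hc; lra.
Qed.

Lemma normal_chord_exists z nu : K z -> outer_normal K z nu ->
  exists h, 0 <= h /\ forall t, K (padd z (pscale t nu)) <-> (- h <= t <= 0).
Proof.
  intros Kz Hnu. destruct K_bounded as (M & HM0 & HM). pose proof (outer_normal_unit _ _ Hnu) as Hn.
  set (S := fun s => 0 <= s /\ K (padd z (pscale (- s) nu))).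
  assert (HS0 : S 0) by (split; [lra|]; replace (padd z (pscale (-0) nu)) with z; auto; apply pt_ext; cbn; ring).
  assert (SB : forall s, S s -> s <= 3 * M) by (intros s [Hs Ks]; apply (K_chord_le z nu s M); auto).
  destruct (is_lub_of_bounded S _ 0 SB HS0) as [h Hh].
  assert (h0 : 0 <= h) by (apply Hh; auto).
  assert (Kh : K (padd z (pscale (- h) nu))).
  { apply K_of_adherent. intros r Hr.
    destruct (is_lub_approx S h r Hh Hr) as (s & [Hs Ks] & Hsh). assert (s <= h) by (apply Hh; split; auto).
    exists (padd z (pscale (- s) nu)). split; auto.
    replace (dot _ _) with ((h - s) * (h - s) * dot nu nu) by pt_ring. rewrite Hn. nra. }
  exists h. split; auto. intro t. split.
  - intros Kt. destruct (Rle_dec t 0) as [Ht|Ht].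
    + split; auto. enough (- t <= h) by lra. apply Hh. split; [lra|].
      replace (pscale (- - t) nu) with (pscale t nu); auto. apply pt_ext; cbn; ring.
    + apply (proj2 Hnu) in Kt. replace (dot _ nu) with (t * dot nu nu) in Kt by pt_ring.
      rewrite Hn in Kt. lra.
  - intros [Ht1 Ht2]. destruct (Req_dec h 0) as [H0|H0].
    + replace (padd z (pscale t nu)) with z; auto. apply pt_ext; cbn; replace t with 0 by lra; ring.
    + apply (K_convex z (padd z (pscale (- h) nu)) (- t / h)); auto; cbn; try (field; auto).
      split; [apply Rmult_le_pos; [lra|apply Rlt_le, Rinv_0_lt_compat; lra]|].
      apply (Rmult_le_reg_r h); [lra|]. unfold Rdiv. rewrite Rmult_assoc, Rinv_l; lra.
Qed.

Lemma line_lower_bound b0 d : dot d d > 0 -> exists L, forall X, K (padd b0 (pscale X d)) -> L <= X.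
Proof.
  intros Hd. destruct K_bounded as (M & HM0 & HM).
  set (B := (M + Rabs (fst b0)) * Rabs (fst d) + (M + Rabs (snd b0)) * Rabs (snd d)).
  exists (- B / dot d d). intros X KX. destruct (HM _ KX) as [H1 H2]. cbn in H1, H2.
  assert (G : forall a b c, Rabs a <= M -> - ((M + Rabs b) * Rabs c) <= (a - b) * c).
  { intros a b c Ha. pose proof (Rle_abs (- ((a - b) * c))). rewrite Rabs_Ropp, Rabs_mult in H.
    pose proof (Rabs_triang a (- b)). rewrite Rabs_Ropp in H0.
    assert (Rabs (a - b) * Rabs c <= (M + Rabs b) * Rabs c)
      by (apply Rmult_le_compat_r; [apply Rabs_pos|unfold Rminus; lra]).
    lra. }
  pose proof (G _ (fst b0) (fst d) H1). pose proof (G _ (snd b0) (snd d) H2).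
  assert (- B <= X * dot d d).
  { replace (X * dot d d) with ((fst b0 + X * fst d - fst b0) * fst d + (snd b0 + X * snd d - snd b0) * snd d)
      by (unfold dot; ring). unfold B; lra. }
  apply (Rmult_le_reg_r (dot d d)); [lra|]. unfold Rdiv. rewrite Rmult_assoc, Rinv_l; lra.
Qed.

Lemma line_first_point b0 d : dot d d > 0 -> (exists X, K (padd b0 (pscale X d))) ->
  exists X0, K (padd b0 (pscale X0 d)) /\ (forall X, K (padd b0 (pscale X d)) -> X0 <= X) /\
    boundary K (padd b0 (pscale X0 d)).
Proof.
  intros Hd [X1 HX1]. destruct (line_lower_bound b0 d Hd) as [L HL].
  set (T := fun y => K (padd b0 (pscale (- y) d))).
  assert (T1 : T (- X1)) by (unfold T; rewrite Ropp_involutive; auto).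
  assert (TB : forall y, T y -> y <= - L) by (intros y Hy; specialize (HL _ Hy); lra).
  destruct (is_lub_of_bounded T _ _ TB T1) as [m Hm].
  assert (Small : forall r, 0 < r -> exists eta, 0 < eta /\ eta * eta * dot d d < r * r).
  { intros r Hr. destruct (small_scale (dot d d) (r / 2)) as (eta & Heta & H); [lra | lra |].
    exists eta. split; [lra | nra]. }
  assert (KX : K (padd b0 (pscale (- m) d))).
  { apply K_of_adherent. intros r Hr. destruct (Small r Hr) as (eta & Heta & Hsm).
    destruct (is_lub_approx T m eta Hm Heta) as (y & Ty & Hy).
    assert (y <= m) by (apply Hm; auto).
    exists (padd b0 (pscale (- y) d)). split; auto.
    replace (dot _ _) with ((m - y) * (m - y) * dot d d) by pt_ring.
    pose proof (dot_self_nonneg d).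
    assert ((m - y) * (m - y) * dot d d <= eta * eta * dot d d) by (apply Rmult_le_compat_r; nra).
    lra. }
  exists (- m). split; auto. split.
  - intros X HX. enough (- X <= m) by lra. apply Hm. unfold T; rewrite Ropp_involutive; auto.
  - split; auto. intros [r [Hr Hb]]. destruct (Small r Hr) as (eta & Heta & Hsm).
    enough (m + eta <= m) by lra. apply Hm. apply Hb, dist_lt_of_sq; auto.
    replace (dot _ _) with (eta * eta * dot d d) by pt_ring. auto.
Qed.

Lemma segment_boundary_crossing y w : ~ K y -> K w ->
  exists X0, 0 < X0 <= 1 /\ boundary K (padd y (pscale X0 (psub w y))).
Proof.
  intros Ky Kw. set (d := psub w y).
  assert (Hd : dot d d > 0) by (apply sq_dist_pos; intros E; apply Ky; rewrite <- E; auto).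
  assert (Ew : padd y (pscale 1 d) = w) by (unfold d; apply pt_ext; cbn; ring).
  destruct (line_first_point y d Hd) as (X0 & Kb & Hmin & Bb); [exists 1; rewrite Ew; auto|].
  exists X0. split; [split|auto].
  - apply Rnot_le_lt; intro Hn. apply Ky.
    replace y with (padd (padd y (pscale X0 d)) (pscale (- X0 / (1 - X0)) (psub w (padd y (pscale X0 d)))))
      by (unfold d; apply pt_ext; cbn; field; lra).
    apply K_segment; auto. apply Rdiv_le1; lra.
  - apply Hmin. rewrite Ew; auto.
Qed.

Lemma K_triangle z u v R a b :
  K z -> K (padd z (pscale R u)) -> K (padd z (pscale R v)) -> 0 < R ->
  0 <= a -> 0 <= b -> a + b <= R -> K (padd z (padd (pscale a u) (pscale b v))).
Proof.
  intros Kz Ku Kv HR Ha Hb Hab.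
  destruct (Req_dec (a + b) 0) as [H0|H0].
  - replace (padd z _) with z; auto.
    apply pt_ext; cbn; replace a with 0 by lra; replace b with 0 by lra; ring.
  - set (S := a + b).
    set (w := padd (padd z (pscale R u)) (pscale (b / S) (psub (padd z (pscale R v)) (padd z (pscale R u))))).
    assert (Kw : K w) by (apply K_segment; auto; apply Rdiv_le1; unfold S; lra).
    replace (padd z (padd (pscale a u) (pscale b v))) with (padd z (pscale (S / R) (psub w z))).
    + apply K_segment; auto. apply Rdiv_le1; unfold S; lra.
    + unfold w, S; apply pt_ext; cbn; field; lra.
Qed.

(* [p] is the first point of [K] along [-n] on the line at [e]-offset [s] from [zeta]; the bound
   comes from the point of the segment [[zeta, c]] on that line. *)
Lemma offset_line_boundary_point zeta e n c s : K zeta -> orthonormal e n -> K c ->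
  0 < s <= dot (psub c zeta) e ->
  exists p, boundary K p /\ dot (psub p zeta) e = s /\
    - dot (psub p zeta) n <= s / dot (psub c zeta) e * (- dot (psub c zeta) n).
Proof.
  intros Kz Hf Kc Hs. pose proof Hf as (He & Hn & Hen).
  set (Xc := dot (psub c zeta) e) in *. set (Yc := - dot (psub c zeta) n).
  set (lam := s / Xc). set (b0 := padd zeta (pscale s e)). set (d := pscale (-1) n).
  assert (Line : forall X w, dot (psub (padd b0 (pscale X d)) zeta) w = s * dot e w - X * dot n w)
    by (intros; unfold b0, d; pt_ring).
  assert (Hlam : 0 <= lam <= 1) by (apply Rdiv_le1; lra).
  assert (Ec : padd zeta (pscale lam (psub c zeta)) = padd b0 (pscale (lam * Yc) d)).
  { rewrite (orthonormal_decomp e n (psub c zeta) Hf) at 1. fold Xc.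
    unfold b0, d, Yc. replace s with (lam * Xc) by (unfold lam; field; lra). apply pt_ext; cbn; ring. }
  destruct (line_first_point b0 d) as (X0 & _ & Hmin & Bp).
  { replace (dot d d) with (dot n n) by (unfold d; pt_ring). lra. }
  { exists (lam * Yc). rewrite <- Ec. apply K_segment; auto. }
  exists (padd b0 (pscale X0 d)). split; [auto | split].
  - rewrite Line, He, (dot_comm n e), Hen. ring.
  - rewrite Line, Hen, Hn. apply Rle_trans with (lam * Yc); [|unfold lam, Yc; lra].
    enough (X0 <= lam * Yc) by lra. apply Hmin. rewrite <- Ec. apply K_segment; auto.
Qed.

Lemma boundary_exists : exists z, boundary K z.
Proof.
  destruct K_interior_ball as (c & rho & Hr & Hb).
  destruct (line_first_point c (1, 0)) as (X0 & _ & _ & B); [unfold dot; cbn; lra| |eauto].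
  exists 0. apply Hb. replace (dot _ _) with 0 by pt_ring. nra.
Qed.

Lemma depth_eq0 : (forall e, e > 0 -> exists z, boundary K z /\ local_depth K z <= e) -> depth K = 0.
Proof.
  intros H. unfold depth, inf_of.
  set (E := fun x => exists zeta, boundary K zeta /\ - x = local_depth K zeta).
  assert (L : is_lub E 0).
  { split.
    - intros x (z & _ & Hz). pose proof (local_depth_nonneg z). lra.
    - intros b Hb. apply Rnot_lt_le; intro Hlt.
      destruct (H (- b / 2)) as (z & Bz & Hz); [lra|].
      assert (Ez : E (- local_depth K z)) by (exists z; split; auto; ring).
      specialize (Hb _ Ez). lra. }
  rewrite (is_lub_unique _ _ _ (sup_of_is_lub E (ex_intro _ 0 L)) L). ring.
Qed.

Lemma depth_gt0 : (exists d, d > 0 /\ forall z, boundary K z -> d <= local_depth K z) -> depth K > 0.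
Proof.
  intros (d & Hd & H). destruct boundary_exists as [z0 Bz0]. unfold depth, inf_of.
  set (E := fun x => exists zeta, boundary K zeta /\ - x = local_depth K zeta).
  assert (Ub : forall y, E y -> y <= - d) by (intros y (z & Bz & Hz); specialize (H z Bz); lra).
  assert (Ex : exists l, is_lub E l)
    by (apply (is_lub_of_bounded E (- d) (- local_depth K z0)); auto; exists z0; split; auto; ring).
  enough (sup_of E <= - d) by lra. apply (sup_of_is_lub E Ex). auto.
Qed.

End ConvexDomain.

(** * Outer normals and the supplementary angle *)

Section OuterNormals.
Variable K : pt -> Prop.
Hypothesis HK : convex_domain K.

Lemma outer_normal_cone z nu mu a b : outer_normal K z nu -> outer_normal K z mu ->
  0 <= a -> 0 <= b -> dot (padd (pscale a nu) (pscale b mu)) (padd (pscale a nu) (pscale b mu)) = 1 ->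
  outer_normal K z (padd (pscale a nu) (pscale b mu)).
Proof.
  intros [_ Hn] [_ Hm] Ha Hb Hw. split; [apply pnorm_eq1; auto|]. intros y Ky.
  replace (dot (psub y z) (padd (pscale a nu) (pscale b mu)))
    with (a * dot (psub y z) nu + b * dot (psub y z) mu) by pt_ring.
  specialize (Hn y Ky). specialize (Hm y Ky). nra.
Qed.

Definition normal_arc (z : pt) (t1 t2 : R) : Prop :=
  t1 <= t2 /\ forall t, t1 <= t <= t2 -> outer_normal K z (cos t, sin t).

Lemma normal_arc_lt_PI z t1 t2 : normal_arc z t1 t2 -> t2 - t1 < PI.
Proof.
  intros [H12 H]. apply Rnot_le_lt; intro Hle.
  apply (outer_normals_not_opposite K HK z (cos t1, sin t1) (cos (t1 + PI), sin (t1 + PI)));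
    [apply H; lra | apply H; pose proof PI_RGT_0; lra |].
  rewrite dot_unit_angles. replace (t1 + PI - t1) with PI by ring. apply cos_PI.
Qed.

Lemma Omega_ge z t1 t2 : normal_arc z t1 t2 -> t2 - t1 <= Omega K z.
Proof.
  intros Ha. apply (sup_of_ub _ PI); [|exists t1, t2; split; [apply Ha|split; [auto|apply Ha]]].
  intros l (s1 & s2 & H12 & -> & Hs). pose proof (normal_arc_lt_PI z s1 s2 (conj H12 Hs)). lra.
Qed.

Lemma Omega_le_PI z : Omega K z <= PI.
Proof.
  apply sup_of_le; [pose proof PI_RGT_0; lra|].
  intros l (s1 & s2 & H12 & -> & Hs). pose proof (normal_arc_lt_PI z s1 s2 (conj H12 Hs)). lra.
Qed.

Lemma Omega_gt z x : 0 <= x -> x < Omega K z -> exists t1 t2, normal_arc z t1 t2 /\ x < t2 - t1.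
Proof.
  intros Hx H. destruct (sup_of_gt _ x Hx H) as (l & (t1 & t2 & H12 & -> & Hn) & Hl).
  exists t1, t2. split; [split|]; auto.
Qed.

Lemma Omega_le_Omega_K z : boundary K z -> Omega K z <= Omega_K K.
Proof.
  intros Bz. apply (sup_of_ub _ PI); [|exists z; auto].
  intros w (z' & _ & ->). apply Omega_le_PI.
Qed.

(* With [u(t) = (cos t, sin t)], [nu = u(t)] and [th = acos (nu.mu)], for [0 <= phi <= th] the
   normal [u(t + phi)] is the nonnegative combination
   [sin th * u(t + phi) = sin (th - phi) * nu + sin phi * mu]. *)
Lemma normal_arc_between z nu mu t : outer_normal K z nu -> outer_normal K z mu -> dot nu mu <= 0 ->
  nu = (cos t, sin t) -> dot mu (- sin t, cos t) >= 0 ->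
  normal_arc z t (t + acos (dot nu mu)).
Proof.
  intros Hnu Hmu Hd Et Hs.
  pose proof (outer_normal_unit K z mu Hmu) as Nm.
  set (c := dot nu mu) in *. set (s := dot mu (- sin t, cos t)) in *. set (th := acos c).
  assert (Hc1 : -1 < c).
  { destruct (dot_unit_bound nu mu (outer_normal_unit K z nu Hnu) Nm) as [H _].
    destruct H; [auto|]. exfalso. apply (outer_normals_not_opposite K HK z nu mu); auto. }
  assert (Hsc : s * s = 1 - c * c).
  { unfold s, c. rewrite Et. unfold dot in *; cbn in *. pose proof (sin2_cos2 t). unfold Rsqr in *. nra. }
  assert (Ecos : cos th = c) by (apply cos_acos; lra).
  assert (Esin : sin th = s).
  { unfold th. rewrite sin_acos by lra. replace (1 - c²) with (Rsqr s) by (unfold Rsqr; lra).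
    apply sqrt_Rsqr; lra. }
  assert (Hth : PI / 2 <= th <= PI) by (split; [apply acos_ge_PI2; lra | apply acos_bound]).
  assert (Spos : 0 < s).
  { destruct (Rle_dec s 0); [|lra]. assert (c * c = 1) by nra. nra. }
  assert (Emu : mu = (cos t * c - sin t * s, sin t * c + cos t * s)).
  { unfold s, c. rewrite Et. pose proof (sin2_cos2 t). unfold Rsqr in *.
    destruct mu as [m1 m2]. unfold dot; apply pt_ext; cbn.
    - transitivity (m1 * (sin t * sin t + cos t * cos t)); [rewrite H; ring | ring].
    - transitivity (m2 * (sin t * sin t + cos t * cos t)); [rewrite H; ring | ring]. }
  split; [pose proof PI_RGT_0; lra|]. intros tau Htau.
  set (phi := tau - t).
  assert (Ew : (cos tau, sin tau) = padd (pscale (sin (th - phi) / s) nu) (pscale (sin phi / s) mu)).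
  { apply pt_ext; cbn; replace tau with (t + phi) by (unfold phi; ring);
      rewrite ?sin_minus, ?cos_plus, ?sin_plus, Ecos, Esin, Emu, Et; cbn; field; lra. }
  rewrite Ew. apply outer_normal_cone; auto.
  - apply Rdiv_nonneg; [apply sin_ge_0|]; unfold phi in *; lra.
  - apply Rdiv_nonneg; [apply sin_ge_0|]; unfold phi in *; lra.
  - rewrite <- Ew. apply dot_unit_angle.
Qed.

Lemma acos_dot_le_Omega z nu mu : outer_normal K z nu -> outer_normal K z mu -> dot nu mu <= 0 ->
  acos (dot nu mu) <= Omega K z.
Proof.
  intros Hnu Hmu Hd.
  destruct (unit_angle nu (outer_normal_unit K z nu Hnu)) as [t Et].
  destruct (unit_angle mu (outer_normal_unit K z mu Hmu)) as [t' Et'].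
  destruct (Rle_dec 0 (dot mu (- sin t, cos t))) as [Hs|Hs].
  - pose proof (Omega_ge _ _ _ (normal_arc_between z nu mu t Hnu Hmu Hd Et ltac:(lra))). lra.
  - assert (Hs' : dot nu (- sin t', cos t') >= 0) by (rewrite Et, Et' in *; unfold dot in *; cbn in *; lra).
    rewrite dot_comm in Hd |- *.
    pose proof (Omega_ge _ _ _ (normal_arc_between z mu nu t' Hmu Hnu Hd Et' Hs')). lra.
Qed.

Lemma nearest_point_exists e : exists z, K z /\
  forall y, K y -> dot (psub e z) (psub e z) <= dot (psub e y) (psub e y).
Proof.
  destruct (K_interior_ball K HK) as (c & rho & Hr & Hb).
  assert (Kc : K c) by (apply Hb; replace (dot _ _) with 0 by pt_ring; nra).
  destruct (K_bounded K HK) as (M & HM0 & HM).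
  set (F := fun v => exists y, K y /\ v = - dot (psub e y) (psub e y)).
  assert (FB : forall v, F v -> v <= 0) by (intros v (y & _ & ->); pose proof (dot_self_nonneg (psub e y)); lra).
  destruct (is_lub_of_bounded F 0 (- dot (psub e c) (psub e c)) FB) as [m Hm]; [exists c; auto|].
  assert (Hy : forall n, exists y, K y /\ dot (psub e y) (psub e y) < - m + inv_succ n).
  { intros n. destruct (is_lub_approx F m _ Hm (inv_succ_pos n)) as (v & (y & Ky & ->) & Hv).
    exists y; split; auto; lra. }
  destruct (choice _ Hy) as [y Hy'].
  destruct (bounded_pt_seq_cv_subseq y M) as (phi & Hphi & z & Hz); [intros n; apply HM, Hy'|].
  exists z. split; [apply (K_seq_limit K HK (fun n => y (phi n))); auto; intros; apply Hy'|].
  intros w Kw. assert (Fw : F (- dot (psub e w) (psub e w))) by (exists w; auto).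
  pose proof (proj1 Hm _ Fw).
  enough (dot (psub e z) (psub e z) <= - m) by lra.
  apply (Un_cv_le_inv_succ (fun n => dot (psub e (y (phi n))) (psub e (y (phi n))))).
  - apply Un_cv_dot; apply cv_pt_psub; auto; apply cv_pt_const.
  - intros n. destruct (Hy' (phi n)) as [_ H1]. pose proof (inv_succ_subseq phi n Hphi). lra.
Qed.

Lemma nearest_point_obtuse e z : K z ->
  (forall y, K y -> dot (psub e z) (psub e z) <= dot (psub e y) (psub e y)) ->
  forall y, K y -> dot (psub y z) (psub e z) <= 0.
Proof.
  intros Kz Hmin y Ky. apply Rnot_lt_le; intro HA.
  set (A := dot (psub y z) (psub e z)) in *. set (B := dot (psub y z) (psub y z)).
  assert (HB : 0 <= B) by apply dot_self_nonneg.
  set (t := A / (A + B)).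
  assert (Et : t * (A + B) = A) by (unfold t; field; lra).
  assert (Ht : 0 < t <= 1).
  { split; [apply Rdiv_lt_0_compat; lra|].
    apply (Rmult_le_reg_r (A + B)); [lra|]. rewrite Et. lra. }
  specialize (Hmin _ (K_segment K HK z y t Kz Ky ltac:(lra))).
  replace (dot (psub e (padd z (pscale t (psub y z)))) (psub e (padd z (pscale t (psub y z)))))
    with (dot (psub e z) (psub e z) - 2 * t * A + t * t * B) in Hmin by (unfold A, B; pt_ring).
  nra.
Qed.

Lemma outer_normal_of_nearest e : ~ K e -> exists z k, K z /\ 0 < k /\
  outer_normal K z (pscale k (psub e z)) /\
  (forall y, K y -> dot (psub e z) (psub e z) <= dot (psub e y) (psub e y)).
Proof.
  intros He. destruct (nearest_point_exists e) as (z & Kz & Hz).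
  set (D := dot (psub e z) (psub e z)).
  assert (HD : 0 < D) by (apply sq_dist_pos; intros ->; auto).
  assert (Hs : sqrt D * sqrt D = D) by (apply sqrt_sqrt; lra).
  assert (Hs0 : 0 < sqrt D) by (apply sqrt_lt_R0; auto).
  exists z, (/ sqrt D). split; auto. split; [apply Rinv_0_lt_compat; auto|]. split; auto. split.
  - apply pnorm_eq1. transitivity (/ sqrt D * / sqrt D * D); [unfold D; pt_ring|].
    rewrite <- Hs at 3. field. lra.
  - intros y Ky. pose proof (nearest_point_obtuse e z Kz Hz y Ky).
    replace (dot (psub y z) (pscale (/ sqrt D) (psub e z))) with (/ sqrt D * dot (psub y z) (psub e z))
      by pt_ring.
    assert (0 < / sqrt D) by (apply Rinv_0_lt_compat; auto). nra.
Qed.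

(* Project points outside [K] converging to [p]; the normals at the projections accumulate at a
   normal at [p]. *)
Lemma boundary_outer_normal p : boundary K p -> exists nu, outer_normal K p nu.
Proof.
  intros [Kp Hp].
  assert (He : forall n, exists e, dot (psub e p) (psub e p) < inv_succ n * inv_succ n /\ ~ K e).
  { intros n. apply NNPP; intro Hno. apply Hp. exists (inv_succ n). split; [apply inv_succ_pos|].
    intros q Hq. apply NNPP; intro Hq'. apply Hno. exists q. split; auto. apply sq_lt_of_dist_lt; auto. }
  destruct (choice _ He) as [e He'].
  assert (Hz : forall n, exists zk, outer_normal K (fst zk) (snd zk) /\
     Rabs (fst (fst zk) - fst p) <= 2 * inv_succ n /\ Rabs (snd (fst zk) - snd p) <= 2 * inv_succ n).
  { intros n. destruct (He' n) as [H1 H2]. pose proof (inv_succ_pos n).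
    destruct (outer_normal_of_nearest (e n) H2) as (z & k & Kz & Hk & Hn & Hmin).
    exists (z, pscale k (psub (e n) z)). cbn. split; auto.
    assert (A : dot (psub (e n) z) (psub (e n) z) <= inv_succ n * inv_succ n)
      by (specialize (Hmin p Kp); lra).
    apply coords_close_of_sq in A as [A1 A2]; [|lra].
    destruct (coords_close_of_sq (e n) p (inv_succ n)) as [B1 B2]; [lra|lra|]. cbn in *.
    apply Rabs_le_inv in A1, A2, B1, B2. split; apply Rabs_le; split; lra. }
  destruct (choice _ Hz) as [zk Hz'].
  destruct (unit_seq_cv_subseq (fun n => snd (zk n))) as (phi & Hphi & nu & Hnu).
  { intros n. apply (outer_normal_unit K (fst (zk n))), Hz'. }
  exists nu. apply (outer_normal_limit K (fun n => fst (zk (phi n))) (fun n => snd (zk (phi n)))); auto.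
  - intros n; apply Hz'.
  - apply (cv_pt_close _ (fun _ => p) p 2); [apply cv_pt_const|lra|].
    intros n. destruct (Hz' (phi n)) as (_ & H1 & H2). pose proof (inv_succ_subseq phi n Hphi).
    split; lra.
Qed.

End OuterNormals.

(** * Boundary points of small local depth *)

Section SmallDepth.
Variable K : pt -> Prop.
Hypothesis HK : convex_domain K.

(* If the normal chord at [p] has length [h < tau], the point [e] at distance [tau] beyond
   its far end [q] lies outside [K]; its projection [z] onto [K] is within [tau] of [q] and
   the normal there points against [nu]. *)
Lemma short_chord_normals p tau : boundary K p -> 0 < tau -> local_depth K p < tau ->
  exists z nu mu, outer_normal K p nu /\ outer_normal K z mu /\ dot nu mu <= 0 /\
    dot (psub z p) (psub z p) <= (2 * tau) * (2 * tau).
Proof.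
  intros Bp Htau Hld. destruct (boundary_outer_normal K HK p Bp) as [nu Hnu].
  pose proof (outer_normal_unit K p nu Hnu) as Nn.
  destruct (normal_chord_exists K HK p nu (proj1 Bp) Hnu) as (h & Hh & Hc).
  assert (Hht : h < tau).
  { enough (h <= local_depth K p) by lra. apply (normal_chord_le_local_depth K HK). exists nu; auto. }
  set (q := padd p (pscale (- h) nu)). set (e := padd p (pscale (- (h + tau)) nu)).
  assert (Kq : K q) by (apply Hc; lra).
  assert (Ke : ~ K e) by (intro Ke; apply Hc in Ke; lra).
  destruct (outer_normal_of_nearest K HK e Ke) as (z & k & Kz & Hk & Hmu & Hmin).
  pose proof (nearest_point_obtuse K HK e z Kz Hmin q Kq) as V.
  set (a := dot (psub z q) nu). set (b := dot (psub z q) (psub z q)).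
  replace (dot (psub q z) (psub e z)) with (tau * a + b) in V by (unfold a, b, q, e; pt_ring).
  pose proof (dot_sq_le_unit (psub z q) nu Nn) as CS. fold a b in CS.
  assert (Ha : - tau <= a <= 0) by (split; nra).
  exists z, nu, (pscale k (psub e z)). split; [auto | split; [auto | split]].
  - replace (dot nu (pscale k (psub e z))) with (k * (- tau * dot nu nu - a)) by (unfold a, q, e; pt_ring).
    rewrite Nn. nra.
  - replace (dot (psub z p) (psub z p)) with (b - 2 * h * a + h * h * dot nu nu) by (unfold a, b, q; pt_ring).
    rewrite Nn. nra.
Qed.

Lemma normal_pairs_limit (p z nu mu : nat -> pt) : (forall n, K (p n)) ->
  (forall n, outer_normal K (p n) (nu n) /\ outer_normal K (z n) (mu n) /\ dot (nu n) (mu n) <= 0 /\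
     dot (psub (z n) (p n)) (psub (z n) (p n)) <= (2 * inv_succ n) * (2 * inv_succ n)) ->
  exists phi zs nus mus, strict_incr phi /\ cv_pt (fun n => p (phi n)) zs /\
    outer_normal K zs nus /\ outer_normal K zs mus /\ dot nus mus <= 0.
Proof.
  intros Kp Hw. destruct (K_bounded K HK) as (M & HM0 & HM).
  destruct (bounded_pt_seq_cv_subseq p M) as (phi1 & Hp1 & zs & Hzs); [intros n; apply HM, Kp|].
  destruct (unit_seq_cv_subseq (fun n => nu (phi1 n))) as (phi2 & Hp2 & nus & Hnus).
  { intros n. apply (outer_normal_unit K (p (phi1 n))), Hw. }
  destruct (unit_seq_cv_subseq (fun n => mu (phi1 (phi2 n)))) as (phi3 & Hp3 & mus & Hmus).
  { intros n. apply (outer_normal_unit K (z (phi1 (phi2 n)))), Hw. }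
  set (phi := fun n => phi1 (phi2 (phi3 n))).
  assert (Hphi : strict_incr phi) by (unfold phi; apply strict_incr_comp; [|apply strict_incr_comp]; auto).
  assert (Cp : cv_pt (fun n => p (phi n)) zs)
    by (apply (cv_pt_subseq (fun n => p (phi1 n))); auto; apply strict_incr_comp; auto).
  assert (Cnu : cv_pt (fun n => nu (phi n)) nus) by (apply (cv_pt_subseq (fun n => nu (phi1 (phi2 n)))); auto).
  assert (Cz : cv_pt (fun n => z (phi n)) zs).
  { apply (cv_pt_close _ _ zs 2 Cp); [lra|]. intros n. destruct (Hw (phi n)) as (_ & _ & _ & Hd).
    apply coords_close_of_sq in Hd; [|pose proof (inv_succ_pos (phi n)); lra].
    pose proof (inv_succ_subseq phi n Hphi). split; lra. }
  exists phi, zs, nus, mus. split; [auto | split; [auto | split; [|split]]].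
  - apply (outer_normal_limit K (fun n => p (phi n)) (fun n => nu (phi n))); auto. intros n; apply Hw.
  - apply (outer_normal_limit K (fun n => z (phi n)) (fun n => mu (phi n))); auto. intros n; apply Hw.
  - apply (Un_cv_le (fun n => dot (nu (phi n)) (mu (phi n)))); [apply Un_cv_dot; auto|]. intros n; apply Hw.
Qed.

Lemma small_depth_accumulation : (forall n, exists p, boundary K p /\ local_depth K p < inv_succ n) ->
  exists z nu mu, boundary K z /\ outer_normal K z nu /\ outer_normal K z mu /\ dot nu mu <= 0 /\
    forall r, 0 < r -> exists p, boundary K p /\ local_depth K p < r /\ dot (psub p z) (psub p z) < r * r.
Proof.
  intros H. destruct (choice _ H) as [p Hp].
  assert (Hdata : forall n, exists w : pt * pt * pt, outer_normal K (p n) (snd (fst w)) /\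
     outer_normal K (fst (fst w)) (snd w) /\ dot (snd (fst w)) (snd w) <= 0 /\
     dot (psub (fst (fst w)) (p n)) (psub (fst (fst w)) (p n)) <= (2 * inv_succ n) * (2 * inv_succ n)).
  { intros n. destruct (Hp n) as [Bp Hld].
    destruct (short_chord_normals (p n) (inv_succ n) Bp (inv_succ_pos n) Hld) as (z & nu & mu & Hw).
    exists (z, nu, mu). exact Hw. }
  destruct (choice _ Hdata) as [w Hw].
  destruct (normal_pairs_limit p (fun n => fst (fst (w n))) (fun n => snd (fst (w n))) (fun n => snd (w n)))
    as (phi & zs & nus & mus & Hphi & Cp & N1 & N2 & Hd); [intros n; apply Hp | apply Hw |].
  exists zs, nus, mus. split; [|split; [auto | split; [auto | split; [auto|]]]].
  - split; [|apply (outer_normal_not_interior K zs nus N1)].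
    apply (K_seq_limit K HK (fun n => p (phi n))); auto. intros n. apply (Hp (phi n)).
  - intros r Hr. destruct (cv_pt_eventually_near _ _ Cp r Hr) as [N1' HN1].
    destruct (inv_succ_eventually_lt r Hr) as [N2' HN2]. set (N := max N1' N2').
    exists (p (phi N)). destruct (Hp (phi N)) as [B L]. split; [auto | split; [|apply HN1; lia]].
    pose proof (inv_succ_subseq phi N Hphi). specialize (HN2 N ltac:(lia)). lra.
Qed.

Lemma small_depth_right_angle : ~ (exists d, d > 0 /\ forall z, boundary K z -> d <= local_depth K z) ->
  exists z, boundary K z /\ PI / 2 <= Omega K z /\
    forall r, 0 < r -> exists p, boundary K p /\ local_depth K p < r /\ dot (psub p z) (psub p z) < r * r.
Proof.
  intros H.
  assert (Hn : forall n, exists p, boundary K p /\ local_depth K p < inv_succ n).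
  { intros n. apply NNPP; intro Hn. apply H. exists (inv_succ n). split; [apply inv_succ_pos|].
    intros z Bz. apply Rnot_lt_le. intro. apply Hn. eauto. }
  destruct (small_depth_accumulation Hn) as (z & nu & mu & Bz & N1 & N2 & Hd & Hseq).
  exists z. split; [auto | split; auto].
  pose proof (acos_dot_le_Omega K HK z nu mu N1 N2 Hd).
  destruct (dot_unit_bound nu mu (outer_normal_unit K _ _ N1) (outer_normal_unit K _ _ N2)).
  pose proof (acos_ge_PI2 (dot nu mu) ltac:(lra)). lra.
Qed.

End SmallDepth.

(** * An apex with [Omega > PI/2] *)

(* In the frame [(e, n)]: the normal [(a, -b)] at the point [(s, -Y0)] of the wedge
   [{Y >= 0, k Y <= g X}] sees the apex on its inner side, and the chord end [(s - h a, -(Y0 - h b))]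
   stays in the wedge; then [h <= C s]. *)
Lemma wedge_chord_le g k : 0 < g -> 0 < k -> g * g + k * k = 1 ->
  exists C, 0 < C /\ forall s Y0 a b h, 0 < s -> 0 <= Y0 -> k * Y0 <= g * s -> a * a + b * b = 1 ->
    a * s + b * Y0 >= 0 -> 0 <= h -> 0 <= Y0 - h * b -> k * (Y0 - h * b) <= g * (s - h * a) -> h <= C * s.
Proof.
  intros Hg Hk Hgk. assert (g <= 1) by nra. assert (k <= 1) by nra.
  assert (P1 : 0 < 4 / (k * k)) by (apply Rdiv_lt_0_compat; nra).
  assert (P2 : 0 < 1 / k) by (apply Rdiv_lt_0_compat; nra).
  exists (4 / (k * k) + 1 / k + 4). split; [lra|].
  intros s Y0 a b h Hs HY0 HW Hab Hn Hh Hq1 Hq2.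
  assert (0 <= 4 / (k * k) * s) by nra. assert (0 <= 1 / k * s) by nra.
  set (d := k * g / 4).
  destruct (Rle_dec d b) as [Hb|Hb]; [|destruct (Rle_dec b 0) as [Hb0|Hb0]].
  - assert (h * d <= Y0) by nra.
    assert (h * k * k * g <= 4 * (g * s)) by (unfold d in *; nra).
    assert (h * k * k <= 4 * s) by nra.
    assert (h <= 4 / (k * k) * s).
    { apply (Rmult_le_reg_r (k * k)); [nra|]. unfold Rdiv. field_simplify; [|nra]. nra. }
    nra.
  - assert (Ha : 0 <= a) by (apply Rnot_lt_le; intro; nra).
    assert (g * k <= g * a - k * b).
    { assert (0 <= (1 - k) * (g * a)) by (apply Rmult_le_pos; nra).
      assert (0 <= (1 - g) * (- (k * b))) by (apply Rmult_le_pos; nra).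
      assert (0 <= (g * k) * (a - b - 1)) by (apply Rmult_le_pos; nra).
      nra. }
    assert (h * k <= s) by nra.
    assert (h <= 1 / k * s).
    { apply (Rmult_le_reg_r k); [nra|]. unfold Rdiv. field_simplify; [|nra]. nra. }
    nra.
  - assert (Hd : d <= 1/8) by (unfold d; pose proof (Rle_0_sqr (g - k)); unfold Rsqr in *; nra).
    assert (b * (k * Y0) <= d * (g * s)) by (apply Rmult_le_compat; nra).
    assert (a * k >= - (k * g * g / 4)) by (unfold d in *; nra).
    assert (a >= -1/4) by nra.
    assert (Ha : a >= 1/2).
    { destruct (Rle_dec (1/2) a); [lra|]. exfalso. assert (b * b < 1/64) by (unfold d in *; nra). nra. }
    assert (g * a - k * b >= g / 4) by (unfold d in *; nra).
    assert (h * (g / 4) <= g * s) by nra.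
    assert (h <= 4 * s) by nra.
    lra.
Qed.

Section WideAngle.
Variable K : pt -> Prop.
Hypothesis HK : convex_domain K.

(* [n = u(t1)] and [u(t2)] are normals with [t2 - t1 > PI/2], and [(-g, -k)] are the coordinates
   of [u(t2)] in the frame [(e, n)]. *)
Lemma wide_angle_wedge zeta : boundary K zeta -> Omega K zeta > PI / 2 ->
  exists e n g k, orthonormal e n /\ 0 < g /\ 0 < k /\ g * g + k * k = 1 /\
    forall z, K z -> 0 <= - dot (psub z zeta) n /\ k * (- dot (psub z zeta) n) <= g * dot (psub z zeta) e.
Proof.
  intros Bz HO. pose proof PI_RGT_0.
  destruct (Omega_gt K zeta (PI / 2)) as (t1 & t2 & [H12 Hint] & Hl); [lra|auto|].
  pose proof (normal_arc_lt_PI K HK zeta t1 t2 (conj H12 Hint)).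
  set (n := (cos t1, sin t1)). set (nB := (cos t2, sin t2)).
  assert (Nn : outer_normal K zeta n) by (apply Hint; lra).
  assert (NB : outer_normal K zeta nB) by (apply Hint; lra).
  assert (Hneg : dot n nB < 0) by (unfold n, nB; rewrite dot_unit_angles; apply cos_lt_0; lra).
  destruct (orthonormal_completion n nB (outer_normal_unit K _ _ Nn)) as (e & Hf & HeB).
  pose proof (orthonormal_dot e n nB nB Hf) as UB. rewrite (outer_normal_unit K _ _ NB) in UB.
  set (k := - dot n nB). set (g := - dot nB e).
  assert (Hk : 0 < k) by (unfold k; lra).
  assert (Hgk : g * g + k * k = 1) by (unfold g, k; rewrite (dot_comm n nB); lra).
  assert (Hk1 : k < 1).
  { destruct (dot_unit_bound n nB (outer_normal_unit K _ _ Nn) (outer_normal_unit K _ _ NB)) as [[Hlt|Heq] _].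
    - unfold k; lra.
    - exfalso. apply (outer_normals_not_opposite K HK zeta n nB); auto. }
  assert (Hg : 0 < g) by (assert (0 <= g) by (unfold g; lra); nra).
  exists e, n, g, k. do 4 (split; [auto|]). intros z Kz. split.
  - pose proof (proj2 Nn z Kz). lra.
  - pose proof (proj2 NB z Kz) as W. rewrite (orthonormal_dot e n (psub z zeta) nB Hf) in W.
    unfold k, g. rewrite (dot_comm n nB). nra.
Qed.

Lemma wedge_depth_eq0 zeta e n g k : boundary K zeta -> orthonormal e n ->
  0 < g -> 0 < k -> g * g + k * k = 1 ->
  (forall z, K z -> 0 <= - dot (psub z zeta) n /\ k * (- dot (psub z zeta) n) <= g * dot (psub z zeta) e) ->
  depth K = 0.
Proof.
  intros Bz Hf Hg Hk Hgk Wedge. pose proof Hf as (He & Hn & Hen).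
  destruct (wedge_chord_le g k Hg Hk Hgk) as (C & HC & Halg).
  destruct (K_interior_ball K HK) as (c & rho & Hr & Hb).
  assert (Kc : K c) by (apply Hb; replace (dot _ _) with 0 by pt_ring; nra).
  assert (HXc : 0 < dot (psub c zeta) e).
  { assert (Nn : outer_normal K zeta n)
      by (split; [apply pnorm_eq1; auto | intros z Kz; pose proof (Wedge z Kz); lra]).
    pose proof (outer_normal_ball_gap K zeta n c rho Nn Hr Hb). destruct (Wedge c Kc). nra. }
  apply (depth_eq0 K). intros eps Heps.
  destruct (pos_below (dot (psub c zeta) e) (eps / C)) as (s & Hs & HsX & HsC);
    [auto | apply Rdiv_lt_0_compat; lra |].
  assert (HCs : C * s <= eps)
    by (replace eps with (C * (eps / C)) by (field; lra); apply Rmult_le_compat_l; lra).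
  destruct (offset_line_boundary_point K HK zeta e n c s (proj1 Bz) Hf Kc (conj Hs HsX))
    as (p & Bp & Pe & _).
  exists p. split; auto. apply (local_depth_le K); [lra|]. intros nu h Hnu Hh Kq.
  pose proof (outer_normal_unit K _ _ Hnu) as Nnu.
  set (a := dot nu e). set (b := - dot nu n). set (Y0 := - dot (psub p zeta) n).
  assert (Hab : a * a + b * b = 1) by (rewrite (orthonormal_dot e n nu nu Hf) in Nnu; unfold a, b; lra).
  assert (Hpn : a * s + b * Y0 >= 0).
  { pose proof (proj2 Hnu zeta (proj1 Bz)) as Hz.
    replace (dot (psub zeta p) nu) with (- dot (psub p zeta) nu) in Hz by pt_ring.
    rewrite (orthonormal_dot e n (psub p zeta) nu Hf), Pe in Hz. unfold a, b, Y0. nra. }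
  destruct (Wedge p (proj1 Bp)) as [W1 W2]. rewrite Pe in W2.
  destruct (Wedge _ Kq) as [Q1 Q2]. rewrite dot_psub_ray in Q1. rewrite 2!dot_psub_ray, Pe in Q2.
  enough (h <= C * s) by lra. apply (Halg s Y0 a b h); unfold a, b, Y0 in *; nra.
Qed.

End WideAngle.

(** * An apex with [Omega = PI/2] *)

(* In the frame [(u, v)]: the normal [(a, b)] at [p = (x, s)] sees the apex on its inner side,
   and the chord end [(x - h a, s - h b)] stays in the quadrant and, beyond [X = eps/4], in the
   cone of [missing_leg_cone]. *)
Lemma thin_corner_chord_le M r1 eps s x h a b : 0 < s -> 0 <= x -> x <= M * s -> 0 <= M ->
  a * a + b * b = 1 -> x * a + s * b >= 0 -> 0 <= h -> 0 <= x - h * a -> 0 <= s - h * b ->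
  (eps / 4 <= x - h * a -> r1 * (x - h * a) <= eps / 4 * (s - h * b)) -> 0 < r1 -> 0 < eps ->
  s <= r1 -> s * (4 + 4 * M + 4 * M * M) <= eps -> h <= eps.
Proof.
  intros Hs Hx HxM HM Hab Hn Hh HXq HYq Hcone Hr1 He Hsr Hse.
  assert (HMs : M * s <= eps / 4) by nra.
  assert (HMs2 : M * M * s <= eps / 4) by nra.
  assert (Hs4 : s <= eps / 4) by nra.
  destruct (Rle_dec 0 b) as [Hb|Hb].
  - set (Xq := x - h * a) in *. set (Yq := s - h * b) in *.
    assert (HX : Xq <= eps / 2).
    { destruct (Rle_dec (eps / 4) Xq) as [Hd|Hd]; [|lra].
      specialize (Hcone Hd). assert (Yq <= s) by (unfold Yq; nra).
      assert (r1 * Xq <= r1 * (eps / 4)) by nra.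
      assert (Xq <= eps / 4) by nra. lra. }
    assert (Hh2 : h * h = (x - Xq) * (x - Xq) + (s - Yq) * (s - Yq)).
    { unfold Xq, Yq. transitivity (h * h * (a * a + b * b)); [rewrite Hab; ring | ring]. }
    assert (0 <= s - Yq <= s) by (unfold Yq in *; split; nra).
    assert (- (eps / 2) <= x - Xq <= eps / 4) by (unfold Xq in *; split; nra).
    assert ((x - Xq) * (x - Xq) <= eps / 2 * (eps / 2)) by nra.
    assert ((s - Yq) * (s - Yq) <= eps / 4 * (eps / 4)) by nra.
    nra.
  - assert (Ha : a > 0) by (apply Rnot_le_gt; intro; nra).
    destruct (Rle_dec (1/2) a) as [Ha2|Ha2]; [nra|].
    assert (Hbb : - b > 1/2) by nra.
    assert (x * a > s / 2) by nra.
    assert (h * (s / 2) <= x * x) by nra.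
    assert (x * x <= M * M * s * s) by nra.
    assert (h <= 2 * M * M * s) by nra.
    nra.
Qed.

Section RightAngleVertex.
Variable K : pt -> Prop.
Hypothesis HK : convex_domain K.
Variables zeta u v : pt.
Hypothesis Bz : boundary K zeta.
Hypothesis Huv : orthonormal u v.
Hypothesis Hquad : forall y, K y -> 0 <= dot (psub y zeta) u /\ 0 <= dot (psub y zeta) v.

Lemma right_angle_decomp p :
  p = padd zeta (padd (pscale (dot (psub p zeta) u) u) (pscale (dot (psub p zeta) v) v)).
Proof.
  pose proof (orthonormal_decomp u v (psub p zeta) Huv) as D.
  apply pt_ext; [apply (f_equal fst) in D | apply (f_equal snd) in D]; cbn in *; lra.
Qed.

Lemma right_angle_leg_not_interior p : dot (psub p zeta) u = 0 \/ dot (psub p zeta) v = 0 ->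
  ~ interior K p.
Proof.
  pose proof Huv as (Hu & Hv & _).
  intros Hp [r0 [Hr0 Hb0]].
  assert (Near : forall w, dot w w = 1 -> K (padd p (pscale (- (r0 / 2)) w))).
  { intros w Hw. apply Hb0, dist_lt_of_sq; auto.
    replace (dot _ _) with (r0 / 2 * (r0 / 2) * dot w w) by pt_ring. rewrite Hw. nra. }
  destruct Hp as [Hp|Hp].
  - destruct (Hquad _ (Near u Hu)) as [H _]. rewrite dot_psub_ray, Hp, Hu in H. lra.
  - destruct (Hquad _ (Near v Hv)) as [_ H]. rewrite dot_psub_ray, Hp, Hv in H. lra.
Qed.

Lemma right_angle_open_interior r p : 0 < r ->
  K (padd zeta (pscale r u)) -> K (padd zeta (pscale r v)) ->
  0 < dot (psub p zeta) u <= r / 4 -> 0 < dot (psub p zeta) v <= r / 4 -> interior K p.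
Proof.
  intros Hr Ku Kv HX HY.
  set (X := dot (psub p zeta) u) in *. set (Y := dot (psub p zeta) v) in *.
  set (rr := Rmin (Rmin X Y) (r / 4)).
  assert (Hrr : 0 < rr <= X /\ rr <= Y /\ rr <= r / 4).
  { unfold rr. pose proof (Rmin_l (Rmin X Y) (r / 4)). pose proof (Rmin_l X Y). pose proof (Rmin_r X Y).
    pose proof (Rmin_r (Rmin X Y) (r / 4)). repeat split; try lra. repeat apply Rmin_pos; lra. }
  exists rr. split; [lra|]. intros q Hq. apply sq_lt_of_dist_lt in Hq.
  rewrite (orthonormal_dot u v) in Hq by auto. pose proof (dot_self_nonneg (psub q p)).
  assert (A1 := sq_lt_between (dot (psub q p) u) rr ltac:(lra) ltac:(nra)).
  assert (A2 := sq_lt_between (dot (psub q p) v) rr ltac:(lra) ltac:(nra)).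
  rewrite (right_angle_decomp q).
  replace (dot (psub q zeta) u) with (dot (psub q p) u + X) by (unfold X; pt_ring).
  replace (dot (psub q zeta) v) with (dot (psub q p) v + Y) by (unfold Y; pt_ring).
  apply (K_triangle K HK zeta u v r); auto; [apply Bz | lra | lra | lra].
Qed.

Lemma legs_two_segment_vertex r : 0 < r ->
  K (padd zeta (pscale r u)) -> K (padd zeta (pscale r v)) -> two_segment_vertex K zeta.
Proof.
  intros Hr Ku Kv. pose proof Huv as (Hu & Hv & Huv0).
  exists (r / 4), u, v. split; [lra|]. split; [apply pnorm_eq1; auto|]. split; [apply pnorm_eq1; auto|].
  intros p Hp. apply sq_lt_of_dist_lt in Hp.
  rewrite (orthonormal_dot u v (psub p zeta) (psub p zeta) Huv) in Hp.
  pose proof (right_angle_decomp p) as Ep.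
  set (X := dot (psub p zeta) u) in *. set (Y := dot (psub p zeta) v) in *.
  split.
  - intros [Kp Hint]. destruct (Hquad p Kp) as [HX HY]. fold X Y in HX, HY.
    destruct (Req_dec Y 0) as [HY0|HY0].
    { exists X. split; auto. left. rewrite Ep, HY0. apply pt_ext; cbn; ring. }
    destruct (Req_dec X 0) as [HX0|HX0].
    { exists Y. split; auto. right. rewrite Ep, HX0. apply pt_ext; cbn; ring. }
    exfalso. apply Hint, (right_angle_open_interior r); auto; fold X Y; split; nra.
  - intros (s & Hs & Es).
    assert (HXY : (X = s /\ Y = 0) \/ (X = 0 /\ Y = s)).
    { unfold X, Y. destruct Es as [-> | ->]; [left | right]; split.
      - transitivity (s * dot u u); [pt_ring | rewrite Hu; ring].
      - transitivity (s * dot u v); [pt_ring | rewrite Huv0; ring].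
      - transitivity (s * dot v u); [pt_ring | rewrite dot_comm, Huv0; ring].
      - transitivity (s * dot v v); [pt_ring | rewrite Hv; ring]. }
    split.
    + rewrite Ep. apply (K_triangle K HK zeta u v r); auto; [apply Bz | ..];
        destruct HXY as [[-> ->] | [-> ->]]; nra.
    + apply right_angle_leg_not_interior. fold X Y. lra.
Qed.

Lemma right_angle_interior_point : exists c, K c /\ 0 < dot (psub c zeta) u /\ 0 < dot (psub c zeta) v.
Proof.
  pose proof Huv as (Hu & Hv & _). destruct (K_interior_ball K HK) as (c & rho & Hr & Hb).
  assert (Kc : K c) by (apply Hb; replace (dot _ _) with 0 by pt_ring; nra).
  assert (Kw : forall w, dot w w = 1 -> K (padd c (pscale (- (rho / 2)) w)))
    by (intros w Hw; apply Hb; replace (dot _ _) with (rho / 2 * (rho / 2) * dot w w) by pt_ring;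
        rewrite Hw; nra).
  exists c. split; [auto | split].
  - destruct (Hquad _ (Kw u Hu)) as [H _]. rewrite dot_psub_ray, Hu in H. lra.
  - destruct (Hquad _ (Kw v Hv)) as [_ H]. rewrite dot_psub_ray, Hv in H. lra.
Qed.

(* A ball around [zeta + dl u] missing [K] pushes the points of [K] beyond [X = dl] towards the
   other leg. *)
Lemma missing_leg_cone dl r1 : 0 < dl -> 0 < r1 ->
  (forall q, dist q (padd zeta (pscale dl u)) < r1 -> ~ K q) ->
  forall y, K y -> dl <= dot (psub y zeta) u -> r1 * dot (psub y zeta) u <= dl * dot (psub y zeta) v.
Proof.
  intros Hdl Hr1 Hball y Ky Hy. pose proof Huv as (Hu & Hv & Huv0).
  destruct (Hquad y Ky) as [_ HY].
  set (X := dot (psub y zeta) u) in *. set (Y := dot (psub y zeta) v) in *.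
  apply Rnot_lt_le; intro Hlt. set (lam := dl / X).
  assert (Hlam : 0 <= lam <= 1) by (apply Rdiv_le1; lra).
  assert (HlX : lam * X = dl) by (unfold lam; field; lra).
  assert (HlY : lam * Y < r1) by (assert (lam * Y * X < r1 * X) by nra; nra).
  apply (Hball (padd zeta (pscale lam (psub y zeta)))); [|apply K_segment; auto; apply Bz].
  apply dist_lt_of_sq; auto. rewrite (orthonormal_dot u v) by auto.
  replace (dot (psub (padd zeta (pscale lam (psub y zeta))) (padd zeta (pscale dl u))) u)
    with (lam * X - dl * dot u u) by (unfold X; pt_ring).
  replace (dot (psub (padd zeta (pscale lam (psub y zeta))) (padd zeta (pscale dl u))) v)
    with (lam * Y - dl * dot u v) by (unfold Y; pt_ring).
  rewrite Hu, Huv0, HlX. assert (0 <= lam * Y) by nra. nra.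
Qed.

Lemma missing_leg_point_depth_le M r1 eps p s : 0 <= M -> 0 < r1 -> 0 < eps ->
  (forall y, K y -> eps / 4 <= dot (psub y zeta) u ->
     r1 * dot (psub y zeta) u <= eps / 4 * dot (psub y zeta) v) ->
  boundary K p -> dot (psub p zeta) v = s -> 0 < s <= r1 -> s * (4 + 4 * M + 4 * M * M) <= eps ->
  dot (psub p zeta) u <= M * s -> local_depth K p <= eps.
Proof.
  intros HM Hr1 Heps Cone Bp Pv Hs HsL HxM.
  apply (local_depth_le K); [lra|]. intros nu h Hnu Hh Kq.
  pose proof (outer_normal_unit K _ _ Hnu) as Nnu.
  set (x := dot (psub p zeta) u) in *. set (a := dot nu u). set (b := dot nu v).
  assert (Hab : a * a + b * b = 1) by (rewrite (orthonormal_dot u v nu nu Huv) in Nnu; unfold a, b; lra).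
  assert (Hpn : x * a + s * b >= 0).
  { pose proof (proj2 Hnu zeta (proj1 Bz)) as Hz.
    replace (dot (psub zeta p) nu) with (- dot (psub p zeta) nu) in Hz by pt_ring.
    rewrite (orthonormal_dot u v (psub p zeta) nu Huv), Pv in Hz. unfold x, a, b. nra. }
  assert (Eq : forall w, dot (psub (padd p (pscale (- h) nu)) zeta) w = dot (psub p zeta) w - h * dot nu w)
    by (intros; pt_ring).
  pose proof (Hquad _ Kq) as [Q1 Q2]. pose proof (Cone _ Kq) as Cq.
  rewrite !Eq, Pv in Cq. rewrite Eq in Q1. rewrite Eq, Pv in Q2. fold x a b in Q1, Q2, Cq.
  assert (0 <= x) by (apply (Hquad p (proj1 Bp))).
  apply (thin_corner_chord_le M r1 eps s x h a b); auto; lra.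
Qed.

Lemma missing_leg_depth_eq0 : (forall s, 0 < s -> ~ K (padd zeta (pscale s u))) -> depth K = 0.
Proof.
  intros Hray. pose proof Huv as (Hu & Hv & Huv0).
  destruct right_angle_interior_point as (c & Kc & HXc & HYc).
  set (Xc := dot (psub c zeta) u) in *. set (Yc := dot (psub c zeta) v) in *.
  set (M := Xc / Yc). assert (HM : 0 <= M) by (apply Rdiv_nonneg; lra).
  assert (Hf : orthonormal v (pscale (-1) u)).
  { split; [auto | split].
    - transitivity (dot u u); [pt_ring | auto].
    - transitivity (- dot u v); [pt_ring | rewrite Huv0; ring]. }
  apply (depth_eq0 K). intros eps Heps.
  destruct (K_closed K HK _ (Hray (eps / 4) ltac:(lra))) as (r1 & Hr1 & Hball).
  set (L := 4 + 4 * M + 4 * M * M). assert (HL : 0 < L) by (unfold L; nra).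
  destruct (pos_below Yc r1) as (s0 & Hs0 & Hs0Y & Hs0r); auto.
  destruct (pos_below s0 (eps / L)) as (s & Hs & Hss0 & HsL); [auto | apply Rdiv_lt_0_compat; lra |].
  destruct (offset_line_boundary_point K HK zeta v (pscale (-1) u) c s (proj1 Bz) Hf Kc)
    as (p & Bp & Pv & Pu); [fold Yc; lra|].
  replace (dot (psub p zeta) (pscale (-1) u)) with (- dot (psub p zeta) u) in Pu by pt_ring.
  replace (dot (psub c zeta) (pscale (-1) u)) with (- Xc) in Pu by (unfold Xc; pt_ring).
  exists p. split; auto. apply (missing_leg_point_depth_le M r1 eps p s); auto; try lra.
  - apply (missing_leg_cone (eps / 4) r1); auto; lra.
  - apply Rle_trans with (eps / L * L); [apply Rmult_le_compat_r; unfold L in *; nra | right; field; lra].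
  - fold Yc in Pu. replace (M * s) with (s / Yc * Xc) by (unfold M; field; lra). lra.
Qed.

End RightAngleVertex.

Section RightAngle.
Variable K : pt -> Prop.
Hypothesis HK : convex_domain K.

(* Arcs of length [PI/2 - 1/(n+1)] give pairs of normals with [0 <= dot <= 1/(n+1)]. *)
Lemma right_angle_normals zeta : Omega K zeta = PI / 2 ->
  exists nu mu, outer_normal K zeta nu /\ outer_normal K zeta mu /\ dot nu mu = 0.
Proof.
  intros HO. pose proof PI2_3_2.
  assert (Hp : forall n, exists w : pt * pt, outer_normal K zeta (fst w) /\ outer_normal K zeta (snd w) /\
        0 <= dot (fst w) (snd w) <= inv_succ n).
  { intros n. pose proof (inv_succ_pos n). pose proof (inv_succ_le1 n).
    destruct (Omega_gt K zeta (PI / 2 - inv_succ n)) as (t1 & t2 & [H12 Hint] & Hl); [lra|lra|].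
    exists ((cos t1, sin t1), (cos (t1 + (PI / 2 - inv_succ n)), sin (t1 + (PI / 2 - inv_succ n)))). cbn.
    split; [apply Hint; lra|]. split; [apply Hint; lra|].
    rewrite dot_unit_angles. replace (t1 + (PI / 2 - inv_succ n) - t1) with (PI / 2 - inv_succ n) by ring.
    rewrite cos_shift. split; [apply sin_ge_0; lra | left; apply sin_lt_x; auto]. }
  destruct (choice _ Hp) as [w Hw].
  destruct (unit_seq_cv_subseq (fun n => fst (w n))) as (phi1 & Hp1 & nu & Hnu).
  { intros n. apply (outer_normal_unit K zeta), Hw. }
  destruct (unit_seq_cv_subseq (fun n => snd (w (phi1 n)))) as (phi2 & Hp2 & mu & Hmu).
  { intros n. apply (outer_normal_unit K zeta), Hw. }
  set (phi := fun n => phi1 (phi2 n)).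
  assert (Hphi : strict_incr phi) by (unfold phi; apply strict_incr_comp; auto).
  assert (Cnu : cv_pt (fun n => fst (w (phi n))) nu) by (apply (cv_pt_subseq (fun n => fst (w (phi1 n)))); auto).
  assert (Cmu : cv_pt (fun n => snd (w (phi n))) mu) by exact Hmu.
  exists nu, mu. split; [|split].
  - apply (outer_normal_limit K (fun _ => zeta) (fun n => fst (w (phi n))));
      [intros; apply Hw | apply cv_pt_const | auto].
  - apply (outer_normal_limit K (fun _ => zeta) (fun n => snd (w (phi n))));
      [intros; apply Hw | apply cv_pt_const | auto].
  - pose proof (Un_cv_dot _ _ _ _ Cnu Cmu) as Hc. apply Rle_antisym.
    + apply (Un_cv_le_inv_succ _ _ 0 Hc). intros n. destruct (Hw (phi n)) as (_ & _ & _ & H1).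
      pose proof (inv_succ_subseq phi n Hphi). unfold phi in *. lra.
    + enough (- dot nu mu <= 0) by lra. apply (Un_cv_le _ _ 0 (CV_opp _ _ Hc)).
      intros n. destruct (Hw (phi n)) as (_ & _ & H1 & _). unfold phi, opp_seq in *. lra.
Qed.

Lemma right_angle_legs zeta nu mu : outer_normal K zeta nu -> outer_normal K zeta mu -> dot nu mu = 0 ->
  orthonormal (pscale (-1) nu) (pscale (-1) mu) /\
  forall y, K y -> 0 <= dot (psub y zeta) (pscale (-1) nu) /\ 0 <= dot (psub y zeta) (pscale (-1) mu).
Proof.
  intros N1 N2 Hd. split.
  - split; [|split].
    + transitivity (dot nu nu); [pt_ring | apply (outer_normal_unit K zeta); auto].
    + transitivity (dot mu mu); [pt_ring | apply (outer_normal_unit K zeta); auto].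
    + transitivity (dot nu mu); [pt_ring | auto].
  - intros y Ky. pose proof (proj2 N1 y Ky). pose proof (proj2 N2 y Ky).
    split; [replace (dot _ _) with (- dot (psub y zeta) nu) by pt_ring
           | replace (dot _ _) with (- dot (psub y zeta) mu) by pt_ring]; lra.
Qed.

Lemma right_angle_depth_eq0 zeta : boundary K zeta -> Omega K zeta = PI / 2 ->
  ~ two_segment_vertex K zeta -> depth K = 0.
Proof.
  intros Bz HO Hnt.
  destruct (right_angle_normals zeta HO) as (nu & mu & N1 & N2 & Hd).
  destruct (right_angle_legs zeta nu mu N1 N2 Hd) as [Huv Hquad].
  set (u := pscale (-1) nu) in *. set (v := pscale (-1) mu) in *.
  destruct (classic (forall s, 0 < s -> ~ K (padd zeta (pscale s u)))) as [Hu|Hu].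
  { apply (missing_leg_depth_eq0 K HK zeta u v); auto. }
  destruct (classic (forall s, 0 < s -> ~ K (padd zeta (pscale s v)))) as [Hv|Hv].
  { apply (missing_leg_depth_eq0 K HK zeta v u); auto using orthonormal_sym.
    intros y Ky. destruct (Hquad y Ky). split; auto. }
  exfalso. apply Hnt.
  apply not_all_ex_not in Hu as [s1 Hu]. apply imply_to_and in Hu as [Hs1 Hu]. apply NNPP in Hu.
  apply not_all_ex_not in Hv as [s2 Hv]. apply imply_to_and in Hv as [Hs2 Hv]. apply NNPP in Hv.
  set (r := Rmin s1 s2). pose proof (Rmin_l s1 s2). pose proof (Rmin_r s1 s2).
  assert (Hr : 0 < r) by (apply Rmin_pos; lra).
  apply (legs_two_segment_vertex K HK zeta u v Bz Huv Hquad r Hr);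
    [apply (K_ray_shrink K HK zeta u r s1) | apply (K_ray_shrink K HK zeta v r s2)]; auto; try apply Bz; lra.
Qed.

End RightAngle.

(** * Two-segment vertices *)

Section Vertices.
Variable K : pt -> Prop.
Hypothesis HK : convex_domain K.

Lemma interior_segment y rho x lam : 0 < rho -> (forall q, dot (psub q y) (psub q y) < rho * rho -> K q) ->
  K x -> 0 <= lam < 1 -> interior K (padd y (pscale lam (psub x y))).
Proof.
  intros Hr Hb Kx Hl. set (z := padd y (pscale lam (psub x y))). set (c := 1 - lam).
  assert (Hc : 0 < c) by (unfold c; lra).
  exists (c * rho). split; [nra|]. intros q Hq. apply sq_lt_of_dist_lt in Hq.
  set (y' := padd y (pscale (/ c) (psub q z))).
  assert (Ky' : K y').
  { apply Hb. replace (dot (psub y' y) (psub y' y)) with (/ c * / c * dot (psub q z) (psub q z))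
      by (unfold y'; pt_ring).
    assert (0 < / c * / c) by (apply Rmult_lt_0_compat; apply Rinv_0_lt_compat; lra).
    apply Rmult_lt_compat_l with (r := / c * / c) in Hq; auto.
    replace (/ c * / c * (c * rho * (c * rho))) with (rho * rho) in Hq by (field; lra). auto. }
  replace q with (padd y' (pscale lam (psub x y'))).
  - apply K_segment; auto; lra.
  - unfold y', z, c in *; apply pt_ext; cbn; field; lra.
Qed.

(* Opposite chords [z +- r u] force every normal at [z] to be orthogonal to [u]. *)
Lemma opposite_chords_Omega_le z u r : dot u u = 1 -> 0 < r ->
  K (padd z (pscale r u)) -> K (padd z (pscale (- r) u)) -> Omega K z <= PI / 4.
Proof.
  intros Uu Hr Ku Kv. pose proof PI_RGT_0. apply Rnot_lt_le; intro HO.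
  destruct (Omega_gt K z (PI / 4)) as (t1 & t2 & [H12 Hint] & Hl); [lra|auto|].
  assert (Perp : forall t, t1 <= t <= t2 -> dot u (cos t, sin t) = 0).
  { intros t Ht. destruct (Hint t Ht) as [_ Hn]. pose proof (Hn _ Ku) as A1. pose proof (Hn _ Kv) as A2.
    replace (dot (psub (padd z (pscale r u)) z) (cos t, sin t)) with (r * dot u (cos t, sin t))
      in A1 by pt_ring.
    replace (dot (psub (padd z (pscale (- r) u)) z) (cos t, sin t)) with (- r * dot u (cos t, sin t))
      in A2 by pt_ring.
    nra. }
  pose proof (unit_normals_collinear u _ _ Uu (dot_unit_angle t1) (dot_unit_angle (t1 + PI / 4))
    (Perp t1 ltac:(lra)) (Perp (t1 + PI / 4) ltac:(lra))) as Hc.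
  rewrite dot_unit_angles in Hc. replace (t1 + PI / 4 - t1) with (PI / 4) in Hc by ring.
  rewrite cos_PI4 in Hc.
  assert (S2 : sqrt 2 * sqrt 2 = 2) by (apply sqrt_sqrt; lra).
  replace (1 / sqrt 2 * (1 / sqrt 2)) with (1 / (sqrt 2 * sqrt 2)) in Hc
    by (field; apply Rgt_not_eq, sqrt_lt_R0; lra).
  rewrite S2 in Hc. lra.
Qed.

Lemma ray_boundary_normal z w r : K z -> dot w w = 1 -> 0 < r ->
  (forall s, 0 <= s < r -> boundary K (padd z (pscale s w))) ->
  exists nu, outer_normal K z nu /\ dot nu w = 0.
Proof.
  intros Kz Hw Hr RB. destruct (boundary_outer_normal K HK _ (RB (r / 4) ltac:(lra))) as [nu [Nn Hn]].
  pose proof (Hn _ Kz) as A1. pose proof (Hn _ (proj1 (RB (r / 2) ltac:(lra)))) as A2.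
  replace (dot (psub z (padd z (pscale (r / 4) w))) nu) with (- (r / 4) * dot nu w) in A1 by pt_ring.
  replace (dot (psub (padd z (pscale (r / 2) w)) (padd z (pscale (r / 4) w))) nu) with (r / 4 * dot nu w)
    in A2 by pt_field.
  assert (E : dot nu w = 0) by nra.
  exists nu. split; [split; [auto|] | auto]. intros y Ky. specialize (Hn y Ky).
  replace (dot (psub y z) nu) with (dot (psub y (padd z (pscale (r / 4) w))) nu + r / 4 * dot nu w)
    by pt_ring. rewrite E. lra.
Qed.

Section SingleRay.
Variables (z u nu : pt) (r : R).
Hypotheses (Bz : boundary K z) (Uu : dot u u = 1) (Hr : 0 < r)
  (Kray : forall s, 0 <= s < r -> K (padd z (pscale s u)))
  (Nnu : outer_normal K z nu) (Hnu : dot nu u = 0)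
  (Hray : forall p, boundary K p -> dist p z < r -> exists s, 0 <= s /\ p = padd z (pscale s u)).

(* [z] would be interior, as the midpoint of [z - (r/2) u] and [z + (r/2) u]. *)
Lemma single_ray_back_not_in_K : ~ K (padd z (pscale (- (r / 2)) u)).
Proof.
  set (y := padd z (pscale (- (r / 2)) u)). intros Ky.
  assert (Hdy : dist y z < r) by (apply dist_lt_of_sq; auto; unfold y; rewrite sq_dist_ray, Uu; nra).
  assert (Iy : interior K y).
  { apply NNPP; intro Hni. destruct (Hray y (conj Ky Hni) Hdy) as (s & Hs & Ey).
    apply (f_equal (fun p => dot (psub p z) u)) in Ey. unfold y in Ey.
    rewrite !dot_psub_ray, Uu in Ey. replace (dot (psub z z) u) with 0 in Ey by pt_ring. lra. }
  destruct Iy as (r0 & Hr0 & Hb0). apply (proj2 Bz).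
  replace z with (padd y (pscale (1 / 2) (psub (padd z (pscale (r / 2) u)) y)))
    by (unfold y; apply pt_ext; cbn; field).
  apply (interior_segment y r0); auto; [|apply Kray; lra|lra].
  intros q Hq. apply Hb0, dist_lt_of_sq; auto.
Qed.

(* Otherwise the segment from [z - (r/2) u] to a point [w] of [K] near [z] on the inner side
   of [nu] crosses the boundary near [z] off the ray. *)
Lemma single_ray_absurd : False.
Proof.
  set (y := padd z (pscale (- (r / 2)) u)). pose proof single_ray_back_not_in_K as Ky. fold y in Ky.
  destruct (K_interior_ball K HK) as (c & rc & Hrc & Hbc).
  assert (Kc : K c) by (apply Hbc; replace (dot _ _) with 0 by pt_ring; nra).
  destruct (small_scale (dot (psub c z) (psub c z)) (r / 4)) as (tau & Htau & Hsmall);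
    [apply dot_self_nonneg | lra |].
  set (w := padd z (pscale tau (psub c z))).
  assert (Kw : K w) by (apply K_segment; auto; [apply Bz | lra]).
  destruct (segment_boundary_crossing K HK y w Ky Kw) as (X0 & HX0 & Bb).
  set (b := padd y (pscale X0 (psub w y))) in *.
  assert (Eb : psub b z = padd (pscale (1 - X0) (psub y z)) (pscale X0 (psub w z)))
    by (unfold b; apply pt_ext; cbn; ring).
  assert (Hbz : dist b z < r).
  { apply dist_lt_of_sq; auto. rewrite Eb.
    pose proof (dot_convex_comb_le (psub y z) (psub w z) X0 ltac:(lra)) as H.
    replace (dot (psub y z) (psub y z)) with (r / 2 * (r / 2)) in H by (unfold y; rewrite sq_dist_ray, Uu; ring).
    replace (dot (psub w z) (psub w z)) with (tau * tau * dot (psub c z) (psub c z)) in H by (unfold w; pt_ring).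
    nra. }
  destruct (Hray b Bb Hbz) as (s & Hs & Es).
  assert (C1 : dot (psub b z) nu = 0)
    by (rewrite Es; replace (dot _ nu) with (s * dot nu u) by pt_ring; rewrite Hnu; ring).
  replace (dot (psub b z) nu) with ((1 - X0) * (- (r / 2)) * dot nu u + X0 * tau * dot (psub c z) nu) in C1
    by (rewrite Eb; unfold y, w; pt_ring).
  rewrite Hnu in C1.
  pose proof (outer_normal_ball_gap K z nu c rc Nnu Hrc Hbc).
  assert (0 < X0 * tau) by nra. nra.
Qed.

End SingleRay.
End Vertices.

Section VertexDepth.
Variable K : pt -> Prop.
Hypothesis HK : convex_domain K.

(* The normal chord at [z + s u] runs inside the triangle [z, z + R u, z + R v]. *)
Lemma vertex_leg_local_depth z u v nu R s : dot u u = 1 -> dot v v = 1 -> dot u v * dot u v < 1 ->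
  dot u v <= 0 -> 0 < R -> K z -> K (padd z (pscale R u)) -> K (padd z (pscale R v)) ->
  outer_normal K z nu -> dot nu u = 0 -> dot nu v < 0 -> 0 <= s < R / 2 ->
  R * (1 + dot u v) / 2 <= local_depth K (padd z (pscale s u)).
Proof.
  intros Uu Uv Hg Hg0 HR Kz KRu KRv Nnu Hnu Hnv Hs.
  set (g := dot u v) in *. set (p := padd z (pscale s u)).
  assert (Hd : 0 < 1 - g * g) by lra. assert (Hg1 : -1 < g) by nra.
  assert (Np : outer_normal K p nu).
  { destruct Nnu as [Nn Hn]. split; auto. intros y Ky. specialize (Hn y Ky).
    replace (dot (psub y p) nu) with (dot (psub y z) nu - s * dot nu u) by (unfold p; pt_ring).
    rewrite Hnu. lra. }
  assert (Kp : K p).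
  { replace p with (padd z (pscale (s / R) (psub (padd z (pscale R u)) z)))
      by (unfold p; apply pt_ext; cbn; field; lra).
    apply K_segment; auto. apply Rdiv_le1; lra. }
  destruct (normal_chord_exists K HK p nu Kp Np) as (h & Hh & Hc).
  assert (Hld : h <= local_depth K p) by (apply (normal_chord_le_local_depth K HK); exists nu; auto).
  set (c0 := R * (1 + g) / 2). assert (Hc0 : 0 <= c0) by (unfold c0; nra).
  enough (K (padd p (pscale (- c0) nu))) by (apply Hc in H; lra).
  pose proof (unit_basis_decomp u v nu Uu Uv Hg) as B. cbv zeta in B. fold g in B.
  rewrite Hnu in B. set (be := dot nu v / (1 - g * g)).
  replace ((0 - g * dot nu v) / (1 - g * g)) with (- g * be) in B by (unfold be; field; lra).
  replace ((dot nu v - g * 0) / (1 - g * g)) with be in B by (unfold be; field; lra).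
  assert (Hbe : be * (1 - g * g) = dot nu v) by (unfold be; field; lra).
  assert (Nnv : -1 <= dot nu v) by apply (dot_unit_bound nu v (outer_normal_unit K z nu Nnu) Uv).
  assert (Hsum : - c0 * be * (1 - g) = - (R / 2) * dot nu v) by (unfold c0, be; field; lra).
  replace (padd p (pscale (- c0) nu)) with (padd z (padd (pscale (s + c0 * g * be) u) (pscale (- c0 * be) v)))
    by (unfold p; rewrite B; apply pt_ext; cbn; ring).
  assert (Hbe0 : be < 0) by nra.
  assert (0 <= g * be) by nra. assert (0 <= c0 * (g * be)) by (apply Rmult_le_pos; lra).
  apply (K_triangle K HK z u v R); auto; nra.
Qed.

Section TwoSegments.
Variables (z u v : pt) (r : R).
Hypotheses (Bz : boundary K z) (HO : Omega K z = PI / 2) (Hr : 0 < r)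
  (Uu : dot u u = 1) (Uv : dot v v = 1)
  (Hbd : forall p, dist p z < r ->
     (boundary K p <-> exists s, 0 <= s /\ (p = padd z (pscale s u) \/ p = padd z (pscale s v)))).

Lemma vertex_leg_boundary w : w = u \/ w = v -> forall s, 0 <= s < r -> boundary K (padd z (pscale s w)).
Proof.
  intros Hw s Hs. assert (dot w w = 1) by (destruct Hw as [->| ->]; auto).
  apply Hbd; [apply dist_lt_of_sq; auto; rewrite sq_dist_ray, H; nra|].
  exists s. split; [lra|]. destruct Hw as [->| ->]; auto.
Qed.

Lemma vertex_legs_independent : dot u v * dot u v < 1.
Proof.
  pose proof PI_RGT_0. destruct (dot_unit_bound u v Uu Uv) as [H1 H2].
  destruct (Rlt_dec (dot u v * dot u v) 1) as [|Hg]; auto. exfalso.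
  destruct (Req_dec (dot u v) (-1)) as [Hm|Hm].
  - apply dot_unit_eq_m1 in Hm; auto.
    assert (Omega K z <= PI / 4); [|lra].
    apply (opposite_chords_Omega_le K z u (r / 2) Uu); [lra | |].
    + apply (vertex_leg_boundary u (or_introl eq_refl)); lra.
    + replace (padd z (pscale (- (r / 2)) u)) with (padd z (pscale (r / 2) v))
        by (rewrite Hm; apply pt_ext; cbn; ring).
      apply (vertex_leg_boundary v (or_intror eq_refl)); lra.
  - assert (H1' : -1 < dot u v) by lra.
    assert (Hp : dot u (pscale (-1) v) = -1) by (transitivity (- dot u v); [pt_ring | nra]).
    apply dot_unit_eq_m1 in Hp; [|auto|transitivity (dot v v); [pt_ring|auto]].
    assert (Evu : v = u).
    { pose proof (f_equal fst Hp). pose proof (f_equal snd Hp). cbn in *. apply pt_ext; lra. }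
    pose proof (vertex_leg_boundary u (or_introl eq_refl)) as RB.
    destruct (ray_boundary_normal K HK z u r (proj1 Bz) Uu Hr RB) as (nu & Nnu & Hnu).
    apply (single_ray_absurd K HK z u nu r Bz Uu Hr); auto.
    + intros s Hs. apply RB; auto.
    + intros p Bp Hp'. destruct (proj1 (Hbd p Hp') Bp) as (s & Hs & Ep).
      exists s. split; auto. rewrite Evu in Ep. tauto.
Qed.

(* If [u.v > 0], the leg normals would make an angle [> PI/2] by [leg_normals_dot]. *)
Lemma vertex_leg_normals : dot u v <= 0 /\
  exists nu, outer_normal K z nu /\ dot nu u = 0 /\ dot nu v < 0.
Proof.
  pose proof vertex_legs_independent as Hg.
  assert (LegNormal : forall w w', (w = u /\ w' = v) \/ (w = v /\ w' = u) ->
    exists nu, outer_normal K z nu /\ dot nu w = 0 /\ dot nu w' < 0).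
  { intros w w' Hw. assert (Uw : dot w w = 1) by (destruct Hw as [[-> _]|[-> _]]; auto).
    assert (Uw' : dot w' w' = 1) by (destruct Hw as [[_ ->]|[_ ->]]; auto).
    assert (Hww : dot w w' * dot w w' < 1) by (destruct Hw as [[-> ->]|[-> ->]]; rewrite ?(dot_comm v u); auto).
    destruct (ray_boundary_normal K HK z w r (proj1 Bz) Uw Hr) as (nu & Nnu & Hnu).
    { apply vertex_leg_boundary. destruct Hw as [[-> _]|[-> _]]; auto. }
    exists nu. split; [auto | split; [auto|]].
    assert (Kw' : K (padd z (pscale (r / 2) w'))).
    { apply vertex_leg_boundary; [destruct Hw as [[_ ->]|[_ ->]]; auto | lra]. }
    pose proof (proj2 Nnu _ Kw') as A.
    replace (dot (psub (padd z (pscale (r / 2) w')) z) nu) with (r / 2 * dot nu w') in A by pt_ring.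
    destruct (Req_dec (dot nu w') 0) as [E|E]; [|nra].
    pose proof (unit_normals_collinear nu w w' (outer_normal_unit K z nu Nnu) Uw Uw' Hnu E). lra. }
  destruct (LegNormal u v (or_introl (conj eq_refl eq_refl))) as (nu & Nnu & Hnu & Hnuv).
  destruct (LegNormal v u (or_intror (conj eq_refl eq_refl))) as (mu & Nmu & Hmu & Hmuu).
  split; [|exists nu; auto].
  apply Rnot_lt_le; intro Hpos.
  assert (Hd : dot nu mu = - dot u v)
    by (apply leg_normals_dot; auto; apply (outer_normal_unit K z); auto).
  pose proof (acos_dot_le_Omega K HK z nu mu Nnu Nmu ltac:(lra)).
  pose proof (acos_gt_PI2 (dot nu mu) ltac:(nra)). lra.
Qed.

End TwoSegments.

Lemma two_segment_vertex_depth_lb z : boundary K z -> Omega K z = PI / 2 -> two_segment_vertex K z ->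
  exists rho c0, 0 < rho /\ 0 < c0 /\
    forall p, boundary K p -> dot (psub p z) (psub p z) < rho * rho -> c0 <= local_depth K p.
Proof.
  intros Bz HO (r & u & v & Hr & Nu & Nv & Hbd). apply pnorm_eq1 in Nu, Nv.
  pose proof (vertex_legs_independent z u v r Bz HO Hr Nu Nv Hbd) as Hg.
  destruct (vertex_leg_normals z u v r Bz HO Hr Nu Nv Hbd) as (Hg0 & nu & Nnu & Hnu & Hnuv).
  destruct (vertex_leg_normals z v u r Bz HO Hr Nv Nu) as (_ & mu & Nmu & Hmu & Hmuu).
  { intros p Hp. rewrite (Hbd p Hp). split; intros (s & Hs & E); exists s; split; auto; tauto. }
  set (R := r / 2).
  assert (Leg : forall w, w = u \/ w = v -> K (padd z (pscale R w)))
    by (intros; apply (vertex_leg_boundary z u v r Hr Nu Nv Hbd); auto; unfold R; lra).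
  exists (r / 4), (R * (1 + dot u v) / 2). split; [lra|]. split; [unfold R; nra|].
  intros p Bp Hp. assert (Hpd : dist p z < r) by (apply dist_lt_of_sq; auto; nra).
  destruct (proj1 (Hbd p Hpd) Bp) as (s & Hs & [Ep|Ep]); rewrite Ep in Hp |- *;
    rewrite sq_dist_ray in Hp; [rewrite Nu in Hp | rewrite Nv in Hp].
  - apply (vertex_leg_local_depth z u v nu R s Nu Nv Hg Hg0); auto;
      try (apply Leg; tauto); [unfold R; lra | apply Bz | unfold R; nra].
  - rewrite dot_comm. rewrite dot_comm in Hg, Hg0.
    apply (vertex_leg_local_depth z v u mu R s Nv Nu Hg Hg0); auto;
      try (apply Leg; tauto); [unfold R; lra | apply Bz | unfold R; nra].
Qed.

End VertexDepth.

(** * The four cases *)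

Section Depth.
Variable K : pt -> Prop.
Hypothesis HK : convex_domain K.

Lemma depth_gt0_of_acute : Omega_K K < PI / 2 -> depth K > 0.
Proof.
  intros HO. apply (depth_gt0 K HK). apply NNPP; intro Hno.
  destruct (small_depth_right_angle K HK Hno) as (z & Bz & Hz & _).
  pose proof (Omega_le_Omega_K K HK z Bz). lra.
Qed.

Lemma depth_eq0_of_obtuse zeta : boundary K zeta -> Omega K zeta > PI / 2 -> depth K = 0.
Proof.
  intros Bz HO. destruct (wide_angle_wedge K HK zeta Bz HO) as (e & n & g & k & Hf & Hg & Hk & Hgk & W).
  apply (wedge_depth_eq0 K HK zeta e n g k); auto.
Qed.

Lemma depth_gt0_of_right_vertices : Omega_K K = PI / 2 ->
  (forall zeta, boundary K zeta -> Omega K zeta = PI / 2 -> two_segment_vertex K zeta) -> depth K > 0.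
Proof.
  intros HO Hts. apply (depth_gt0 K HK). apply NNPP; intro Hno.
  destruct (small_depth_right_angle K HK Hno) as (z & Bz & Hz & Hseq).
  pose proof (Omega_le_Omega_K K HK z Bz).
  assert (HOz : Omega K z = PI / 2) by lra.
  destruct (two_segment_vertex_depth_lb K HK z Bz HOz (Hts z Bz HOz)) as (rho & c0 & Hrho & Hc0 & Hlb).
  set (m := Rmin rho c0). pose proof (Rmin_l rho c0). pose proof (Rmin_r rho c0).
  pose proof (Rmin_pos _ _ Hrho Hc0) as Hm. fold m in H0, H1, Hm.
  destruct (Hseq m Hm) as (p & Bp & Hld & Hd).
  assert (m * m <= rho * rho) by (apply Rmult_le_compat; lra).
  assert (c0 <= local_depth K p) by (apply Hlb; auto; lra). lra.
Qed.

End Depth.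

Theorem proposition1 (K : pt -> Prop) (HK : convex_domain K) :
  (Omega_K K < PI / 2 -> depth K > 0) /\
  ((exists zeta, boundary K zeta /\ Omega K zeta > PI / 2) -> depth K = 0) /\
  (Omega_K K = PI / 2 ->
     (forall zeta, boundary K zeta -> Omega K zeta = PI / 2 ->
        two_segment_vertex K zeta) ->
     depth K > 0) /\
  (Omega_K K = PI / 2 ->
     (exists zeta, boundary K zeta /\ Omega K zeta = PI / 2 /\
        ~ two_segment_vertex K zeta) ->
     depth K = 0).
Proof.
  split; [apply depth_gt0_of_acute; auto|].
  split; [intros (zeta & Bz & HO); apply (depth_eq0_of_obtuse K HK zeta); auto|].
  split; [apply depth_gt0_of_right_vertices; auto|].
  intros _ (zeta & Bz & HO & Hnt). apply (right_angle_depth_eq0 K HK zeta); auto.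
Qed.
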